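(* (Homotopy invariance of the $\mu$-invariant.) Let $F\colon[a,b]\times[0,1]\to\mathfrak S_1(\mathbb T)$ be continuous with $F(a,t)=\mathbf 1$ for all $t\in[0,1]$ and $F(b,t)=F_1$ for all $t\in[0,1]$, where $F_1\in\mathfrak S_1(\mathbb T)$ is fixed. Then the paths $F(\cdot,0)$ and $F(\cdot,1)$ have the same $\mu$-invariant: $\mu(\theta;F(\cdot,0))=\mu(\theta;F(\cdot,1))$ for all $\theta\in(0,2\pi)$.
   Context: Rigged sets: each point has a multiplicity in $\{0,1,\dots,\infty\}$; an enumeration lists each point according to its multiplicity. For a metric space $X$ with base point $x_0$, $\mathfrak S_1(X)$ is the set of countable rigged subsets of $X$ with $x_0$ of infinite multiplicity, no accumulation point other than $x_0$, and $d(S,\mathbf x_0)<\infty$, where $d(S,T)=\inf\sum_j\mathrm{dist}(s_j,t_j)$ over enumerations and $\mathbf x_0$ is $x_0$ with infinite multiplicity; $\mathfrak S_1(\mathbb T)$ has base point $1$ (arc-length metric), $\mathfrak S_1(\mathbb R)$ base point $0$; $\mathbf 1$ denotes $1$ with infinite multiplicity. $p\colon\mathfrak S_1(\mathbb R)\to\mathfrak S_1(\mathbb T)$ is induced by $\theta\mapsto e^{i\theta}$. For $\theta\in(0,2\pi)$ and $\theta_1<\theta_2$, $[\theta;\theta_1,\theta_2]=\frac12\big(\#\{k\in\mathbb Z:\theta_1<\theta+2\pi k<\theta_2\}+\#\{k\in\mathbb Z:\theta_1\le\theta+2\pi k\le\theta_2\}\big)$, $[\theta;\theta_1,\theta_2]=-[\theta;\theta_2,\theta_1]$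 if $\theta_2<\theta_1$, and $0$ if equal. The $\mu$-invariant of a continuous path $S\colon[a,b]\to\mathfrak S_1(\mathbb T)$ is $\mu(\theta;S)=\sum_j[\theta;\theta_j(a),\theta_j(b)]$, where $\tilde S\colon[a,b]\to\mathfrak S_1(\mathbb R)$ is a continuous lift ($p\circ\tilde S=S$) and $\theta_1,\theta_2,\dots$ are continuous real functions such that for each $r$, $\{\theta_j(r)\}$ (together with $0$ of infinite multiplicity) equals $\tilde S(r)$; it does not depend on these choices. *)

From Stdlib Require Import Reals Lra ZArith List ClassicalEpsilon.
From Coquelicot Require Import Coquelicot.
Open Scope R_scope.

Inductive mult : Type := Fin (n : nat) | Inf.

Definition rigged (X : Type) := X -> mult.

Definition finite_card {I : Type} (P : I -> Prop) (n : nat) : Prop :=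
  exists l : list I, NoDup l /\ length l = n /\ forall i, P i <-> In i l.

Definition has_mult (P : nat -> Prop) (m : mult) : Prop :=
  match m with
  | Fin n => finite_card P n
  | Inf => forall N : nat, exists j : nat, (N <= j)%nat /\ P j
  end.

Definition enumerates {X : Type} (S : rigged X) (e : nat -> X) : Prop :=
  forall x, has_mult (fun j => e j = x) (S x).

(** d(S,T) < eps, where d(S,T) = inf over enumerations of sum_j dist(s_j,t_j). *)
Definition rdist_lt {X : Type} (dist : X -> X -> R) (S T : rigged X) (eps : R) : Prop :=
  exists (s t : nat -> X), enumerates S s /\ enumerates T t /\
    ex_series (fun j => dist (s j) (t j)) /\
    Series (fun j => dist (s j) (t j)) < eps.

Definition accum {X : Type} (dist : X -> X -> R) (S : rigged X) (y : X) : Prop :=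
  forall eps, 0 < eps -> exists x, x <> y /\ dist x y < eps /\ S x <> Fin 0.

(** S belongs to S_1(X) (base point x0): countable (it has an enumeration),
    x0 of infinite multiplicity, no accumulation point other than x0, and
    d(S, x0^oo) < oo (the only enumeration of x0^oo is the constant one). *)
Definition in_S1 {X : Type} (dist : X -> X -> R) (x0 : X) (S : rigged X) : Prop :=
  S x0 = Inf /\
  (forall y, y <> x0 -> ~ accum dist S y) /\
  exists s : nat -> X, enumerates S s /\ ex_series (fun j => dist (s j) x0).

(** The unit circle with the arc-length metric. *)
Definition T : Type := {z : C | Cmod z = 1}.
Definition distT (z w : T) : R := 2 * asin (Cmod (proj1_sig z - proj1_sig w) / 2).
Definition oneT : T := exist _ (RtoC 1) Cmod_1.

Definition distR (x y : R) : R := Rabs (x - y).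

Definition is_base_rigged {X : Type} (x0 : X) (S : rigged X) : Prop :=
  S x0 = Inf /\ forall x, x <> x0 -> S x = Fin 0.

Definition rpath_cont {X : Type} (dist : X -> X -> R) (a b : R) (P : R -> rigged X) : Prop :=
  forall r0, a <= r0 <= b -> forall eps, 0 < eps -> exists delta, 0 < delta /\
    forall r, a <= r <= b -> Rabs (r - r0) < delta -> rdist_lt dist (P r) (P r0) eps.

Definition rhom_cont {X : Type} (dist : X -> X -> R) (a b : R) (F : R -> R -> rigged X) : Prop :=
  forall r0 t0, a <= r0 <= b -> 0 <= t0 <= 1 -> forall eps, 0 < eps ->
    exists delta, 0 < delta /\
    forall r t, a <= r <= b -> 0 <= t <= 1 -> Rabs (r - r0) < delta -> Rabs (t - t0) < delta ->
      rdist_lt dist (F r t) (F r0 t0) eps.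

Definition real_cont_on (a b : R) (f : R -> R) : Prop :=
  forall r0, a <= r0 <= b -> forall eps, 0 < eps -> exists delta, 0 < delta /\
    forall r, a <= r <= b -> Rabs (r - r0) < delta -> Rabs (f r - f r0) < eps.

(** p(St) = S, where p is induced by theta |-> e^{i theta}. *)
Definition proj_eq (St : rigged R) (S : rigged T) : Prop :=
  exists e : nat -> R, enumerates St e /\
    forall z : T, has_mult (fun j => (cos (e j), sin (e j)) = proj1_sig z) (S z).

(** Lifting data for mu: a continuous lift St of S into S_1(R) together with
    continuous functions th_j such that {th_j(r)} u 0^oo = St(r). *)
Definition mu_data (a b : R) (S : R -> rigged T) (St : R -> rigged R)
    (th : nat -> R -> R) : Prop :=
  (forall r, a <= r <= b -> in_S1 distR 0 (St r)) /\
  rpath_cont distR a b St /\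
  (forall r, a <= r <= b -> proj_eq (St r) (S r)) /\
  (forall j, real_cont_on a b (th j)) /\
  (forall r, a <= r <= b ->
     St r 0 = Inf /\
     forall x, x <> 0 -> has_mult (fun j => th j r = x) (St r x)).

Definition zcard (P : Z -> Prop) : nat :=
  epsilon (inhabits 0%nat) (fun n => finite_card P n).

Definition bracket (theta th1 th2 : R) : R :=
  let half x y :=
    (INR (zcard (fun k => x < theta + 2 * PI * IZR k < y)) +
     INR (zcard (fun k => x <= theta + 2 * PI * IZR k <= y))) / 2 in
  match Rlt_dec th1 th2 with
  | left _ => half th1 th2
  | right _ => match Rlt_dec th2 th1 with
               | left _ => - half th2 th1
               | right _ => 0
               end
  end.

Definition mu_sum (a b theta : R) (th : nat -> R -> R) : R :=
  Series (fun j => bracket theta (th j a) (th j b)).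

From Stdlib Require Import Reals Lra Lia ZArith List ClassicalEpsilon Classical
  ProofIrrelevance FunctionalExtensionality.
From Coquelicot Require Import Coquelicot.
Open Scope R_scope.

(* Fix [η] so small that [e^{iθ}] is the only point of [F1] within [η] of itself.  The
   Lipschitz crossing counter [ramp θ η] agrees with the bracket count at every point [η]-away
   from the crossings [θ + 2πk] or on them; the endpoints of the lifted paths are such points
   (lifts of [1] lie in [2πZ], lifts of points of [F1] are isolated by the choice of [η]), so
   [μ(θ; F(·,t)) = V_t(b) - V_t(a)] where [V_t(r)] sums [ramp] over the lift of [F(r,t)].
   Summing [2π ramp(arg z)] over [z] in [F(r,t)] gives an angle [G(r,t)], continuous modulo [2π]
   on [[a,b] x [0,1]], equal to [0] at [r = a], constant at [r = b], and lifted by [2π V_0]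
   and [2π V_1] on the edges [t = 0] and [t = 1].  Cutting the rectangle into squares too small
   for [G] to wind around them shows that both lifts have the same total increment. *)

(** * Finite sums *)

Fixpoint psum (h : nat -> R) (n : nat) : R :=
  match n with O => 0 | S n => psum h n + h n end.

Lemma psum_ext h g n : (forall j, (j < n)%nat -> h j = g j) -> psum h n = psum g n.
Proof.
  induction n as [|n IH]; intros H; simpl; [reflexivity|].
  rewrite IH by (intros; apply H; lia). rewrite H by lia. reflexivity.
Qed.

Lemma psum_stable h N M :
  (forall j, (N <= j)%nat -> h j = 0) -> (N <= M)%nat -> psum h M = psum h N.
Proof. intros H HM; induction HM; simpl; auto. rewrite IHHM, H by lia; ring. Qed.

Lemma psum_plus h g n : psum (fun j => h j + g j) n = psum h n + psum g n.
Proof. induction n; simpl; [ring | rewrite IHn; ring]. Qed.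

Lemma psum_minus h g n : psum (fun j => h j - g j) n = psum h n - psum g n.
Proof. induction n; simpl; [ring | rewrite IHn; ring]. Qed.

Lemma psum_scal c h n : psum (fun j => c * h j) n = c * psum h n.
Proof. induction n; simpl; [ring | rewrite IHn; ring]. Qed.

Lemma psum_const0 n : psum (fun _ => 0) n = 0.
Proof. induction n; simpl; [ring | rewrite IHn; ring]. Qed.

Lemma psum_swap (h : nat -> nat -> R) n m :
  psum (fun i => psum (h i) m) n = psum (fun j => psum (fun i => h i j) n) m.
Proof.
  induction n; simpl.
  - rewrite psum_const0; reflexivity.
  - rewrite IHn, <- psum_plus; reflexivity.
Qed.

Lemma psum_le h g n : (forall j, (j < n)%nat -> h j <= g j) -> psum h n <= psum g n.
Proof.
  induction n; simpl; intros H; [lra|].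
  specialize (IHn (fun j Hj => H j ltac:(lia))). specialize (H n ltac:(lia)). lra.
Qed.

Lemma psum_ge0 h n : (forall j, 0 <= h j) -> 0 <= psum h n.
Proof. intros H; rewrite <- (psum_const0 n); apply psum_le; auto. Qed.

Lemma psum_abs h n : Rabs (psum h n) <= psum (fun j => Rabs (h j)) n.
Proof.
  induction n; simpl; [rewrite Rabs_R0; lra|].
  eapply Rle_trans; [apply Rabs_triang | lra].
Qed.

Lemma psum_telescope (f : nat -> R) n : psum (fun i => f (S i) - f i) n = f n - f O.
Proof. induction n; simpl; [ring | rewrite IHn; ring]. Qed.

Lemma sum_f_R0_psum h n : sum_f_R0 h n = psum h (S n).
Proof. induction n; simpl in *; [ring | rewrite IHn; ring]. Qed.

Lemma Series_finite h N : (forall j, (N <= j)%nat -> h j = 0) -> Series h = psum h N.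
Proof.
  intros H. unfold Series.
  rewrite (Lim_seq_ext_loc _ (fun _ => psum h N)), Lim_seq_const; [reflexivity|].
  exists N. intros n Hn. rewrite sum_n_Reals, sum_f_R0_psum. apply psum_stable; auto.
Qed.

Lemma psum_le_Series h N : (forall j, 0 <= h j) -> ex_series h -> psum h N <= Series h.
Proof.
  intros Hp Hex.
  assert (Hge0 : forall g, (forall j, 0 <= g j) -> ex_series g -> 0 <= Series g).
  { intros g Hg Hexg.
    assert (E0 : Series (fun _ => 0) = 0) by (apply (Series_finite _ O); auto).
    rewrite <- E0. apply Series_le; auto. intros; split; [lra | auto]. }
  destruct N as [|N]; [apply Hge0; auto|].
  rewrite (Series_incr_n h (S N)) by (auto; lia). simpl Init.Nat.pred.
  rewrite sum_f_R0_psum.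
  assert (0 <= Series (fun k => h (S N + k)%nat)).
  { apply Hge0; auto. apply (ex_series_incr_n h (S N)) in Hex. exact Hex. }
  lra.
Qed.

Definition is_finsum (h : nat -> R) (v : R) : Prop :=
  exists N, (forall j, (N <= j)%nat -> h j = 0) /\ v = psum h N.

Lemma is_finsum_eventually h v :
  is_finsum h v -> exists N, forall M, (N <= M)%nat -> v = psum h M.
Proof. intros [N [HN ->]]. exists N. intros M HM. symmetry. apply psum_stable; auto. Qed.

Lemma is_finsum_unique h v w : is_finsum h v -> is_finsum h w -> v = w.
Proof.
  intros Hv [N [HN ->]]. destruct (is_finsum_eventually _ _ Hv) as [M HM].
  rewrite (HM (Nat.max N M)) by lia. apply psum_stable; auto; lia.
Qed.

Lemma is_finsum_common h g v w :
  is_finsum h v -> is_finsum g w -> exists M, v = psum h M /\ w = psum g M.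
Proof.
  intros H1 H2.
  destruct (is_finsum_eventually _ _ H1) as [N1 HN1].
  destruct (is_finsum_eventually _ _ H2) as [N2 HN2].
  exists (Nat.max N1 N2). split; [apply HN1 | apply HN2]; lia.
Qed.

Lemma is_finsum_Series h v : is_finsum h v -> Series h = v.
Proof. intros [N [HN ->]]. apply Series_finite; auto. Qed.

Lemma is_finsum_sub h g v w :
  is_finsum h v -> is_finsum g w -> is_finsum (fun j => h j - g j) (v - w).
Proof.
  intros [N1 [H1 ->]] [N2 [H2 ->]]. exists (Nat.max N1 N2). split.
  - intros j Hj. rewrite H1, H2 by lia. ring.
  - rewrite psum_minus, (psum_stable h N1 (Nat.max N1 N2)), (psum_stable g N2 (Nat.max N1 N2))
      by (auto; lia). reflexivity.
Qed.

Definition indic (P : Prop) : R := if excluded_middle_informative P then 1 else 0.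

Definition count_lt (P : nat -> Prop) (N : nat) : R := psum (fun j => indic (P j)) N.

Lemma indic_bounds P : 0 <= indic P <= 1.
Proof. unfold indic; destruct excluded_middle_informative; lra. Qed.

Lemma count_lt_ext P Q N : (forall j, P j <-> Q j) -> count_lt P N = count_lt Q N.
Proof.
  intros H; apply psum_ext; intros j _; unfold indic.
  repeat destruct excluded_middle_informative; firstorder.
Qed.

Lemma count_lt_ge1 P N j : P j -> (j < N)%nat -> 1 <= count_lt P N.
Proof.
  intros Hj. unfold count_lt. induction N as [|N IH]; intros HN; [lia|]; simpl.
  pose proof (indic_bounds (P N)).
  destruct (Nat.eq_dec j N) as [->|Hne].
  - assert (0 <= psum (fun j => indic (P j)) N)
      by (apply psum_ge0; intros; apply indic_bounds).
    unfold indic at 2; destruct excluded_middle_informative; [lra | tauto].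
  - specialize (IH ltac:(lia)); lra.
Qed.

Lemma count_lt_list (l : list nat) N :
  NoDup l -> (forall x, In x l -> (x < N)%nat) -> INR (length l) = count_lt (fun j => In j l) N.
Proof.
  induction l as [|x l IH]; intros Hnd Hb.
  - unfold count_lt. rewrite (psum_ext _ (fun _ => 0)), psum_const0; [reflexivity|].
    intros j _; unfold indic; destruct excluded_middle_informative; simpl in *; tauto.
  - inversion Hnd as [|? ? Hx Hnd']; subst.
    assert (Hsplit : count_lt (fun j => In j (x :: l)) N
                     = count_lt (fun j => In j l) N + count_lt (fun j => j = x) N).
    { unfold count_lt. rewrite <- psum_plus. apply psum_ext; intros j _. simpl In. unfold indic.
      repeat destruct excluded_middle_informative; try lra; intuition congruence. }
    assert (Hone : count_lt (fun j => j = x) N = 1).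
    { assert (Hx' : (x < N)%nat) by (apply Hb; simpl; auto). clear - Hx'.
      unfold count_lt. induction N as [|N IH]; [lia|]; simpl.
      destruct (Nat.eq_dec N x) as [->|Hne].
      + rewrite (psum_ext _ (fun _ => 0)), psum_const0.
        * unfold indic; destruct excluded_middle_informative; [lra | tauto].
        * intros j Hj; unfold indic; destruct excluded_middle_informative; [lia | auto].
      + rewrite IH by lia. unfold indic; destruct excluded_middle_informative; [lia | lra]. }
    rewrite Hsplit, Hone, <- IH by (auto; intros; apply Hb; simpl; auto).
    simpl length; rewrite S_INR; reflexivity.
Qed.

Lemma has_mult_count_lt P m N :
  has_mult P (Fin m) -> (forall j, P j -> (j < N)%nat) -> INR m = count_lt P N.
Proof.
  intros [l [Hnd [<- Hiff]]] Hb.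
  rewrite (count_lt_list l N Hnd) by (intros x Hx; apply Hb, Hiff, Hx).
  apply count_lt_ext. intros; symmetry; apply Hiff.
Qed.

Lemma psum_count_invariant {X : Type} (f : X -> R) (u w : nat -> X) M :
  (forall x, f x <> 0 -> count_lt (fun k => u k = x) M = count_lt (fun k => w k = x) M) ->
  psum (fun j => f (u j)) M = psum (fun k => f (w k)) M.
Proof.
  intros Hcount.
  set (cw := fun x => count_lt (fun k => w k = x) M).
  assert (Hu : forall j, (j < M)%nat -> f (u j) <> 0 -> cw (u j) <> 0).
  { intros j Hj Hf. unfold cw. rewrite <- Hcount by auto.
    pose proof (count_lt_ge1 (fun k => u k = u j) M j eq_refl Hj). lra. }
  assert (Hw : forall k, (k < M)%nat -> cw (w k) <> 0).
  { intros k Hk. pose proof (count_lt_ge1 (fun i => w i = w k) M k eq_refl Hk).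
    unfold cw; lra. }
  (* count each pair [(j, k)] with [u j = w k] with weight [f (u j) / cw (u j)] *)
  transitivity (psum (fun j => psum (fun k => indic (w k = u j) * (f (u j) / cw (u j))) M) M).
  - apply psum_ext; intros j Hj.
    rewrite (psum_ext _ (fun k => f (u j) / cw (u j) * indic (w k = u j))) by (intros; ring).
    rewrite psum_scal. change (psum (fun k => indic (w k = u j)) M) with (cw (u j)).
    destruct (Req_dec (f (u j)) 0) as [E|Hne]; [rewrite E; unfold Rdiv; ring|].
    field. apply Hu; auto.
  - rewrite psum_swap. apply psum_ext; intros k Hk.
    rewrite (psum_ext _ (fun j => f (w k) / cw (w k) * indic (u j = w k))).
    2:{ intros j _. unfold indic.
        destruct (excluded_middle_informative (w k = u j)) as [E1|N1],
                 (excluded_middle_informative (u j = w k)) as [E2|N2];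
          [rewrite E1; ring | congruence | congruence | ring]. }
    rewrite psum_scal. change (psum (fun j => indic (u j = w k)) M)
      with (count_lt (fun j => u j = w k) M).
    destruct (Req_dec (f (w k)) 0) as [E|Hne]; [rewrite E; unfold Rdiv; ring|].
    rewrite Hcount by auto. fold (cw (w k)). field. apply Hw; auto.
Qed.

(** * Sums over rigged sets *)

Lemma has_mult_iff P Q m : (forall j, P j <-> Q j) -> has_mult P m -> has_mult Q m.
Proof.
  destruct m; simpl.
  - intros H [l [? [? Hl]]]. exists l; repeat split; auto; intros; firstorder.
  - intros H Hm N. destruct (Hm N) as [j [? ?]]. exists j; split; auto; apply H; auto.
Qed.

Lemma has_mult_nonzero P m j : has_mult P m -> P j -> m <> Fin 0.
Proof.
  intros Hm Hj ->. destruct Hm as [l [_ [Hl Hiff]]]. apply Hiff in Hj.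
  destruct l; simpl in *; [tauto | lia].
Qed.

Lemma has_mult_witness P m : has_mult P m -> m <> Fin 0 -> exists j, P j.
Proof.
  destruct m; simpl.
  - intros [l [_ [Hl Hiff]]] Hn. destruct l as [|x l]; [simpl in Hl; subst; tauto|].
    exists x; apply Hiff; simpl; auto.
  - intros H _. destruct (H O) as [j [_ ?]]; eauto.
Qed.

Lemma list_nat_bound (l : list nat) : exists B, forall x, In x l -> (x < B)%nat.
Proof.
  induction l as [|y l [B HB]]; [exists O; simpl; tauto|].
  exists (Nat.max (S y) B). intros x [->|Hx]; [lia|]. specialize (HB x Hx); lia.
Qed.

Section RiggedSums.

Variables (X : Type) (dist : X -> X -> R) (x0 : X).
Hypothesis dist_ge0 : forall x y, 0 <= dist x y.

(* This is how the functions [th j] of [mu_data] list a lifted rigged set: they say nothing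
   about the base point. *)
Definition enum_far (S : rigged X) (c : R) (u : nat -> X) : Prop :=
  forall x, c <= dist x x0 -> has_mult (fun j => u j = x) (S x).

Definition supported_far (f : X -> R) (c : R) : Prop :=
  forall x, f x <> 0 -> c <= dist x x0.

Lemma enumerates_enum_far S c u : enumerates S u -> enum_far S c u.
Proof. intros H x _; apply H. Qed.

Lemma tail_dist_lt (s : nat -> X) c :
  ex_series (fun j => dist (s j) x0) -> 0 < c ->
  exists N, forall j, (N <= j)%nat -> dist (s j) x0 < c.
Proof.
  intros Hex Hc. apply ex_series_lim_0, is_lim_seq_spec in Hex.
  destruct (Hex (mkposreal c Hc)) as [N HN]. exists N. intros j Hj.
  specialize (HN j Hj). simpl in HN. rewrite Rminus_0_r, Rabs_pos_eq in HN; auto.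
Qed.

Section Tail.

Variables (S : rigged X) (s : nat -> X) (c : R) (N : nat).
Hypothesis Hs : enumerates S s.
Hypothesis Htail : forall j, (N <= j)%nat -> dist (s j) x0 < c.

Lemma far_mult_finite x :
  c <= dist x x0 -> exists m, S x = Fin m /\ forall j, s j = x -> (j < N)%nat.
Proof.
  intros Hx. specialize (Hs x). destruct (S x) as [m|] eqn:E.
  - exists m; split; auto. intros j Hj. destruct (Nat.lt_ge_cases j N) as [|HjN]; auto.
    specialize (Htail j HjN); subst; lra.
  - destruct (Hs N) as [j [Hj Hj']]. specialize (Htail j Hj). subst; lra.
Qed.

Lemma enum_far_tail (u : nat -> X) :
  enum_far S c u -> exists B, forall j, (B <= j)%nat -> dist (u j) x0 < c.
Proof.
  intros Hu.
  (* the far points are among [s 0, ..., s (N-1)], each carrying finitely many indices of [u] *)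
  assert (HB : forall M, exists B, forall i, (i < M)%nat -> c <= dist (s i) x0 ->
                 forall j, u j = s i -> (j < B)%nat).
  { induction M as [|M [B HB]]; [exists O; intros; lia|].
    destruct (Rle_lt_dec c (dist (s M) x0)) as [Hc|Hc].
    - destruct (far_mult_finite (s M) Hc) as [m [Em _]].
      pose proof (Hu (s M) Hc) as Hm. rewrite Em in Hm.
      destruct Hm as [l [_ [_ Hl]]]. destruct (list_nat_bound l) as [B' HB'].
      exists (Nat.max B B'). intros i Hi Hci j Hj.
      destruct (Nat.eq_dec i M) as [->|Hne].
      + assert (j < B')%nat by (apply HB', Hl; auto). lia.
      + assert (j < B)%nat by (apply (HB i); auto; lia). lia.
    - exists B. intros i Hi Hci j Hj.
      destruct (Nat.eq_dec i M) as [->|Hne]; [lra | apply (HB i); auto; lia]. }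
  destruct (HB N) as [B HB']. exists B. intros j Hj.
  destruct (Rlt_le_dec (dist (u j) x0) c) as [|Hc]; auto. exfalso.
  destruct (far_mult_finite (u j) Hc) as [m [Em Hlt]].
  pose proof (Hu (u j) Hc) as Hm. rewrite Em in Hm.
  pose proof (Hs (u j)) as Hsm. rewrite Em in Hsm.
  destruct (has_mult_witness _ _ Hsm (has_mult_nonzero _ _ j Hm eq_refl)) as [i Hi].
  assert (j < B)%nat by (apply (HB' i); [apply Hlt | rewrite Hi |]; auto). lia.
Qed.

Lemma enum_far_psum (f : X -> R) (u w : nat -> X) :
  supported_far f c -> enum_far S c u -> enum_far S c w ->
  exists M, (forall j, (M <= j)%nat -> f (u j) = 0 /\ f (w j) = 0) /\
    psum (fun j => f (u j)) M = psum (fun j => f (w j)) M.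
Proof.
  intros Hf Hu Hw.
  destruct (enum_far_tail u Hu) as [B1 HB1].
  destruct (enum_far_tail w Hw) as [B2 HB2].
  set (M := Nat.max B1 B2).
  assert (Zero : forall v B, (forall j, (B <= j)%nat -> dist (v j) x0 < c) ->
            forall j, (B <= j)%nat -> f (v j) = 0).
  { intros v B HB j Hj. destruct (Req_dec (f (v j)) 0) as [|Hne]; auto.
    apply Hf in Hne. specialize (HB j Hj). lra. }
  exists M; split; [intros j Hj; split; [apply (Zero u B1) | apply (Zero w B2)]; auto; lia|].
  apply psum_count_invariant. intros x Hx. pose proof (Hf x Hx) as Hc.
  destruct (far_mult_finite x Hc) as [m [Em _]].
  pose proof (Hu x Hc) as H1. pose proof (Hw x Hc) as H2. rewrite Em in H1, H2.
  rewrite <- (has_mult_count_lt _ m M H1), <- (has_mult_count_lt _ m M H2); auto;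
    intros j Hj; destruct (Nat.lt_ge_cases j M) as [|HjM]; auto; exfalso; apply Hx;
    rewrite <- Hj; [apply (Zero w B2) | apply (Zero u B1)]; auto; lia.
Qed.

End Tail.

Section Finsum.

Variables (S : rigged X) (c : R) (f : X -> R).
Hypotheses (HS : in_S1 dist x0 S) (Hc : 0 < c) (Hf : supported_far f c).

Lemma enum_far_is_finsum (u : nat -> X) :
  enum_far S c u -> exists v, is_finsum (fun j => f (u j)) v.
Proof.
  intros Hu. destruct HS as [_ [_ [s [Hs Hex]]]].
  destruct (tail_dist_lt s c Hex Hc) as [N HN].
  destruct (enum_far_tail S s c N Hs HN u Hu) as [B HB].
  exists (psum (fun j => f (u j)) B), B; split; auto.
  intros j Hj. destruct (Req_dec (f (u j)) 0) as [|Hne]; auto.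
  apply Hf in Hne. specialize (HB j Hj); lra.
Qed.

Lemma enum_far_is_finsum_transfer (u w : nat -> X) v :
  enum_far S c u -> enum_far S c w ->
  is_finsum (fun j => f (u j)) v -> is_finsum (fun j => f (w j)) v.
Proof.
  intros Hu Hw [N1 [HN1 ->]]. destruct HS as [_ [_ [s [Hs Hex]]]].
  destruct (tail_dist_lt s c Hex Hc) as [N HN].
  destruct (enum_far_psum S s c N Hs HN f u w Hf Hu Hw) as [M [HM E]].
  exists M; split; [intros j Hj; apply HM; auto|].
  rewrite <- E, <- (psum_stable (fun j => f (u j)) N1 (Nat.max N1 M)) by (auto; lia).
  apply psum_stable; [intros; apply HM; auto | lia].
Qed.

End Finsum.

(* Junk unless [f] vanishes near [x0]; see [rsum_spec]. *)
Definition rsum (f : X -> R) (S : rigged X) : R :=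
  epsilon (inhabits 0)
    (fun v => exists e, enumerates S e /\ is_finsum (fun j => f (e j)) v).

Lemma rsum_spec (f : X -> R) (S : rigged X) c u :
  in_S1 dist x0 S -> 0 < c -> supported_far f c -> enum_far S c u ->
  is_finsum (fun j => f (u j)) (rsum f S).
Proof.
  intros HS Hc Hf Hu.
  assert (Hex : exists v e, enumerates S e /\ is_finsum (fun j => f (e j)) v).
  { pose proof HS as [_ [_ [s [Hs _]]]].
    destruct (enum_far_is_finsum S c f HS Hc Hf s (enumerates_enum_far S c s Hs)) as [v Hv].
    eauto. }
  destruct (epsilon_spec (inhabits 0) _ Hex) as [e [He Hv]].
  exact (enum_far_is_finsum_transfer S c f HS Hc Hf e u _
           (enumerates_enum_far S c e He) Hu Hv).
Qed.

Lemma rsum_sub_psum (f : X -> R) (S S' : rigged X) c eps :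
  in_S1 dist x0 S -> in_S1 dist x0 S' -> 0 < c -> supported_far f c ->
  rdist_lt dist S S' eps ->
  exists (s u : nat -> X) M,
    rsum f S - rsum f S' = psum (fun j => f (s j) - f (u j)) M /\
    psum (fun j => dist (s j) (u j)) M < eps.
Proof.
  intros HS HS' Hc Hf [s [u [Hs [Hu [Hex Hlt]]]]].
  pose proof (rsum_spec f S c s HS Hc Hf (enumerates_enum_far S c s Hs)) as H1.
  pose proof (rsum_spec f S' c u HS' Hc Hf (enumerates_enum_far S' c u Hu)) as H2.
  destruct (is_finsum_common _ _ _ _ H1 H2) as [M [-> ->]].
  exists s, u, M. split; [symmetry; apply psum_minus|].
  eapply Rle_lt_trans; [apply psum_le_Series|]; auto.
Qed.

End RiggedSums.

Arguments enum_far {X} dist x0 S c u.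
Arguments supported_far {X} dist x0 f c.
Arguments enumerates_enum_far {X} dist x0 S c u.
Arguments tail_dist_lt {X} dist x0 dist_ge0 s c.
Arguments far_mult_finite {X} dist x0 S s c N.
Arguments rsum {X} f S.
Arguments rsum_spec {X} dist x0 dist_ge0 f S c u.
Arguments rsum_sub_psum {X} dist x0 dist_ge0 f S S' c eps.

(** * Angles and the circle *)

Lemma Int_part_bounds x : IZR (Int_part x) <= x < IZR (Int_part x) + 1.
Proof. destruct (base_Int_part x); lra. Qed.

Lemma Int_part_unique x k : IZR k <= x < IZR k + 1 -> Int_part x = k.
Proof. intros H. symmetry. apply Int_part_spec. lra. Qed.

Lemma IZR_lt_succ_le m n : (m < n)%Z -> IZR m + 1 <= IZR n.
Proof. intros H. rewrite <- plus_IZR. apply IZR_le; lia. Qed.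

Lemma Rabs_IZR_ge1 n : n <> 0%Z -> 1 <= Rabs (IZR n).
Proof.
  intros H. destruct (Z.lt_ge_cases n 0).
  - assert (IZR n <= -1) by (apply IZR_le; lia). rewrite Rabs_left by lra; lra.
  - assert (1 <= IZR n) by (apply IZR_le; lia). rewrite Rabs_pos_eq by lra; lra.
Qed.

Definition in2PIZ (u : R) : Prop := exists m : Z, u = 2 * PI * IZR m.

Lemma in2PIZ_0 : in2PIZ 0.
Proof. exists 0%Z; simpl; ring. Qed.

Lemma in2PIZ_add u v : in2PIZ u -> in2PIZ v -> in2PIZ (u + v).
Proof. intros [m ->] [n ->]. exists (m + n)%Z. rewrite plus_IZR; ring. Qed.

Lemma in2PIZ_sub u v : in2PIZ u -> in2PIZ v -> in2PIZ (u - v).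
Proof. intros [m ->] [n ->]. exists (m - n)%Z. rewrite minus_IZR; ring. Qed.

Lemma in2PIZ_psum h n : (forall j, in2PIZ (h j)) -> in2PIZ (psum h n).
Proof. intros H; induction n; simpl; [apply in2PIZ_0 | apply in2PIZ_add; auto]. Qed.

Lemma Rabs_2PIZ_ge m : m <> 0%Z -> 2 * PI <= Rabs (2 * PI * IZR m).
Proof.
  intros Hm. pose proof PI_RGT_0. apply Rabs_IZR_ge1 in Hm.
  rewrite Rabs_mult, (Rabs_pos_eq (2 * PI)) by lra. nra.
Qed.

Lemma in2PIZ_small x : in2PIZ x -> Rabs x < 2 * PI -> x = 0.
Proof.
  intros [m ->] H. destruct (Z.eq_dec m 0) as [->|Hm]; [simpl; ring|].
  apply Rabs_2PIZ_ge in Hm. lra.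
Qed.

Definition wrap (u : R) : R := u - 2 * PI * IZR (Int_part (u / (2 * PI) + / 2)).

Lemma wrap_range u : - PI <= wrap u < PI.
Proof.
  unfold wrap. pose proof PI_RGT_0.
  destruct (Int_part_bounds (u / (2 * PI) + / 2)) as [H1 H2].
  set (k := IZR (Int_part (u / (2 * PI) + / 2))) in *. set (w := u / (2 * PI)) in *.
  replace u with (2 * PI * w) by (unfold w; field; apply PI_neq0).
  replace (2 * PI * w - 2 * PI * k) with (2 * PI * (w - k)) by ring.
  split.
  - replace (- PI) with (2 * PI * (- / 2)) by field. apply Rmult_le_compat_l; lra.
  - replace PI with (2 * PI * (/ 2)) at 2 by field. apply Rmult_lt_compat_l; lra.
Qed.

Lemma wrap_in2PIZ u : in2PIZ (u - wrap u).
Proof. unfold wrap. exists (Int_part (u / (2 * PI) + / 2)); ring. Qed.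

Lemma wrap_eq u v : in2PIZ (u - v) -> - PI <= v < PI -> wrap u = v.
Proof.
  intros [m Hm] Hv. unfold wrap. pose proof PI_RGT_0.
  rewrite (Int_part_unique _ m); [lra|].
  split; [apply Rmult_le_reg_l with (2 * PI) | apply Rmult_lt_reg_l with (2 * PI)];
    try lra; replace (2 * PI * (u / (2 * PI) + / 2)) with (u + PI) by (field; lra); lra.
Qed.

Lemma wrap_0 : wrap 0 = 0.
Proof. apply wrap_eq; [rewrite Rminus_0_r; apply in2PIZ_0 | pose proof PI_RGT_0; lra]. Qed.

Lemma wrap_shift u v : in2PIZ (u - v) -> wrap u = wrap v.
Proof.
  intros Huv. apply wrap_eq; [|apply wrap_range].
  replace (u - wrap v) with ((u - v) + (v - wrap v)) by ring.
  apply in2PIZ_add; auto. apply wrap_in2PIZ.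
Qed.

Lemma Rabs_wrap_le_shift u k : Rabs (wrap u) <= Rabs (u - 2 * PI * IZR k).
Proof.
  pose proof (wrap_range u). destruct (wrap_in2PIZ u) as [k0 Hk0]. pose proof PI_RGT_0.
  replace (u - 2 * PI * IZR k) with (wrap u + 2 * PI * IZR (k0 - k))
    by (rewrite minus_IZR; lra).
  destruct (Z.eq_dec (k0 - k) 0) as [->|Hne]; [simpl; rewrite Rmult_0_r, Rplus_0_r; lra|].
  apply Rabs_2PIZ_ge in Hne.
  pose proof (Rabs_triang_inv (2 * PI * IZR (k0 - k)) (- wrap u)) as Htri.
  rewrite Rabs_Ropp in Htri. rewrite Rplus_comm.
  replace (2 * PI * IZR (k0 - k) - - wrap u) with (2 * PI * IZR (k0 - k) + wrap u) in Htri by ring.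
  assert (Rabs (wrap u) <= PI) by (apply Rabs_le; lra). lra.
Qed.

Lemma Rabs_wrap_le u : Rabs (wrap u) <= Rabs u.
Proof. pose proof (Rabs_wrap_le_shift u 0) as H. simpl in H. rewrite Rmult_0_r, Rminus_0_r in H; auto. Qed.

Lemma Rabs_wrap_triang u v : Rabs (wrap (u + v)) <= Rabs (wrap u) + Rabs (wrap v).
Proof.
  destruct (wrap_in2PIZ u) as [a Ha]. destruct (wrap_in2PIZ v) as [b Hb].
  eapply Rle_trans; [apply (Rabs_wrap_le_shift (u + v) (a + b))|].
  rewrite plus_IZR. replace (u + v - 2 * PI * (IZR a + IZR b)) with (wrap u + wrap v) by lra.
  apply Rabs_triang.
Qed.

Lemma Rabs_wrap_opp u : Rabs (wrap (- u)) = Rabs (wrap u).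
Proof.
  destruct (wrap_in2PIZ u) as [a Ha]. destruct (wrap_in2PIZ (- u)) as [b Hb].
  apply Rle_antisym.
  - eapply Rle_trans; [apply (Rabs_wrap_le_shift (- u) (- a))|]. rewrite opp_IZR.
    replace (- u - 2 * PI * - IZR a) with (- wrap u) by lra. rewrite Rabs_Ropp; lra.
  - eapply Rle_trans; [apply (Rabs_wrap_le_shift u (- b))|]. rewrite opp_IZR.
    replace (u - 2 * PI * - IZR b) with (- wrap (- u)) by lra. rewrite Rabs_Ropp; lra.
Qed.

Lemma Rabs_wrap_psum h n : Rabs (wrap (psum h n)) <= psum (fun j => Rabs (wrap (h j))) n.
Proof.
  induction n; simpl; [rewrite wrap_0, Rabs_R0; lra|].
  eapply Rle_trans; [apply Rabs_wrap_triang | lra].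
Qed.

Lemma Cmod_cos_sin x : Cmod (cos x, sin x) = 1.
Proof.
  unfold Cmod; cbn [fst snd].
  replace (cos x ^ 2 + sin x ^ 2) with 1 by (pose proof (sin2_cos2 x); unfold Rsqr in *; nra).
  apply sqrt_1.
Qed.

Definition expT (x : R) : T := exist _ (cos x, sin x) (Cmod_cos_sin x).

Lemma T_eq (z w : T) : proj1_sig z = proj1_sig w -> z = w.
Proof. destruct z, w; simpl; intros ->. f_equal. apply proof_irrelevance. Qed.

Lemma T_norm2 (z : T) : fst (proj1_sig z) ^ 2 + snd (proj1_sig z) ^ 2 = 1.
Proof.
  destruct z as [[p q] Hz]; cbn [fst snd proj1_sig]. unfold Cmod in Hz; cbn [fst snd] in Hz.
  rewrite <- (sqrt_sqrt (p ^ 2 + q ^ 2)) by nra. rewrite Hz; ring.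
Qed.

Lemma periodic_2PIZ (f : R -> R) :
  (forall x n, f (x + 2 * INR n * PI) = f x) -> forall x k, f (x + 2 * PI * IZR k) = f x.
Proof.
  intros Hf x k. destruct (Z.le_gt_cases 0 k).
  - rewrite <- (Z2Nat.id k), <- INR_IZR_INZ by auto.
    rewrite <- (Hf x (Z.to_nat k)). f_equal; ring.
  - assert (Hk : IZR k = - INR (Z.to_nat (- k)))
      by (rewrite INR_IZR_INZ, Z2Nat.id, opp_IZR by lia; ring).
    rewrite Hk, <- (Hf (x + 2 * PI * - INR (Z.to_nat (- k))) (Z.to_nat (- k))). f_equal; ring.
Qed.

Lemma expT_2PIZ x k : expT (x + 2 * PI * IZR k) = expT x.
Proof.
  apply T_eq; simpl.
  rewrite (periodic_2PIZ cos cos_period), (periodic_2PIZ sin sin_period); reflexivity.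
Qed.

Lemma expT_eq_in2PIZ x y : expT x = expT y -> in2PIZ (x - y).
Proof.
  intros H. apply (f_equal (@proj1_sig _ _)) in H. simpl in H. inversion H as [[Hc Hs]].
  set (d := x - y).
  assert (Hd : cos d = 1).
  { unfold d. rewrite cos_minus, <- Hc, <- Hs. pose proof (sin2_cos2 x). unfold Rsqr in *. lra. }
  replace d with (2 * (d / 2)) in Hd by field. rewrite cos_2a_sin in Hd.
  destruct (sin_eq_0_0 (d / 2)) as [k Hk]; [nra|]. exists k. lra.
Qed.

Lemma in2PIZ_expT_eq x y : in2PIZ (x - y) -> expT x = expT y.
Proof. intros [k Hk]. replace x with (y + 2 * PI * IZR k) by lra. apply expT_2PIZ. Qed.

Definition argT (z : T) : R :=
  let (p, q) := proj1_sig z in if Rle_dec 0 q then acos p else - acos p.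

Lemma expT_argT z : expT (argT z) = z.
Proof.
  pose proof (T_norm2 z) as Hn. apply T_eq. destruct z as [[p q] Hz]; simpl in *.
  assert (Hp : -1 <= p <= 1) by (split; nra).
  assert (Hs : sqrt (1 - p²) = Rabs q) by (rewrite <- sqrt_Rsqr_abs; f_equal; unfold Rsqr; lra).
  unfold argT; simpl; destruct Rle_dec as [h|h].
  - rewrite cos_acos, sin_acos, Hs, Rabs_pos_eq by auto. reflexivity.
  - rewrite cos_neg, sin_neg, cos_acos, sin_acos, Hs, Rabs_left by (auto; lra). f_equal; ring.
Qed.

Lemma argT_bounds z : - PI <= argT z <= PI.
Proof.
  unfold argT. destruct (proj1_sig z) as [p q].
  destruct Rle_dec; pose proof (acos_bound p); lra.
Qed.

Lemma oneT_expT : oneT = expT 0.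
Proof. apply T_eq; simpl. rewrite cos_0, sin_0; reflexivity. Qed.

Lemma argT_oneT : argT oneT = 0.
Proof. unfold argT; simpl. destruct Rle_dec; [apply acos_1 | lra]. Qed.

(* The chord length [|e^{ix} - e^{iy}| = 2 |sin((x-y)/2)|] turns [distT] into the arc length. *)
Lemma distT_expT x y : distT (expT x) (expT y) = Rabs (wrap (x - y)).
Proof.
  pose proof PI_RGT_0. pose proof (wrap_range (x - y)).
  set (d := wrap (x - y)) in *.
  assert (Hc : cos (x - y) = cos d).
  { destruct (wrap_in2PIZ (x - y)) as [k Hk]. fold d in Hk.
    replace (x - y) with (d + 2 * PI * IZR k) by lra. apply (periodic_2PIZ cos cos_period). }
  unfold distT; simpl proj1_sig.
  assert (HC : Cmod (Cminus (cos x, sin x) (cos y, sin y)) = 2 * Rabs (sin (d / 2))).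
  { unfold Cmod, Cminus, Cplus, Copp; cbn [fst snd].
    replace ((cos x + - cos y) ^ 2 + (sin x + - sin y) ^ 2) with (2 - 2 * cos (x - y)).
    2:{ rewrite cos_minus. pose proof (sin2_cos2 x). pose proof (sin2_cos2 y). unfold Rsqr in *. nra. }
    rewrite Hc. replace d with (2 * (d / 2)) at 1 by field. rewrite cos_2a_sin.
    replace (2 - 2 * (1 - 2 * sin (d / 2) * sin (d / 2))) with (Rsqr (2 * sin (d / 2)))
      by (unfold Rsqr; ring).
    rewrite sqrt_Rsqr_abs, Rabs_mult, (Rabs_pos_eq 2) by lra. reflexivity. }
  rewrite HC. replace (2 * Rabs (sin (d / 2)) / 2) with (Rabs (sin (d / 2))) by field.
  destruct (Rle_dec 0 d) as [h|h].
  - assert (0 <= sin (d / 2)) by (apply sin_ge_0; lra).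
    rewrite (Rabs_pos_eq (sin _)), (Rabs_pos_eq d), asin_sin by (auto; lra). field.
  - assert (0 <= sin (- d / 2)) by (apply sin_ge_0; lra).
    replace (d / 2) with (- (- d / 2)) by field. rewrite sin_neg.
    rewrite Rabs_Ropp, (Rabs_pos_eq (sin _)), (Rabs_left d), asin_sin by (auto; lra). field.
Qed.

Lemma distT_argT z w : distT z w = Rabs (wrap (argT z - argT w)).
Proof. rewrite <- (expT_argT z) at 1. rewrite <- (expT_argT w) at 1. apply distT_expT. Qed.

Lemma distT_ge0 z w : 0 <= distT z w.
Proof. rewrite distT_argT. apply Rabs_pos. Qed.

Lemma distT_sym z w : distT z w = distT w z.
Proof.
  rewrite !distT_argT, <- Rabs_wrap_opp. do 3 f_equal. ring.
Qed.

Lemma distT_triang z w v : distT z v <= distT z w + distT w v.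
Proof.
  rewrite !distT_argT. replace (argT z - argT v) with ((argT z - argT w) + (argT w - argT v)) by ring.
  apply Rabs_wrap_triang.
Qed.

Lemma distT_eq0 z w : distT z w = 0 -> z = w.
Proof.
  rewrite distT_argT. intros H. apply Rabs_eq_0 in H.
  rewrite <- (expT_argT z), <- (expT_argT w). apply in2PIZ_expT_eq.
  pose proof (wrap_in2PIZ (argT z - argT w)) as Hz. rewrite H, Rminus_0_r in Hz; auto.
Qed.

(** * Counting crossings *)

Lemma finite_card_unique {I : Type} (P : I -> Prop) n m :
  finite_card P n -> finite_card P m -> n = m.
Proof.
  intros [l1 [N1 [<- H1]]] [l2 [N2 [<- H2]]].
  apply Nat.le_antisymm; apply NoDup_incl_length; auto; intros z Hz; firstorder.
Qed.

Lemma zcard_eq P n : finite_card P n -> zcard P = n.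
Proof.
  intros H. unfold zcard. apply (finite_card_unique P); auto.
  apply epsilon_spec. exists n; auto.
Qed.

Lemma finite_card_zrange lo n : finite_card (fun k => (lo <= k < lo + Z.of_nat n)%Z) n.
Proof.
  exists (map (fun i => (lo + Z.of_nat i)%Z) (seq 0 n)). split; [|split].
  - apply NoDup_map_NoDup_ForallPairs; [intros a b _ _ E; lia | apply seq_NoDup].
  - rewrite length_map, length_seq; reflexivity.
  - intros k. rewrite in_map_iff. split.
    + intros Hk. exists (Z.to_nat (k - lo)). split; [lia | apply in_seq; lia].
    + intros [a [<- Ha]]. apply in_seq in Ha. lia.
Qed.

Lemma zcard_interval (P : Z -> Prop) lo hi :
  (lo <= hi + 1)%Z -> (forall k, P k <-> (lo <= k <= hi)%Z) -> INR (zcard P) = IZR (hi - lo + 1).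
Proof.
  intros H HP. rewrite (zcard_eq P (Z.to_nat (hi - lo + 1))).
  - rewrite INR_IZR_INZ, Z2Nat.id by lia. reflexivity.
  - destruct (finite_card_zrange lo (Z.to_nat (hi - lo + 1))) as [l [Hnd [Hl Hiff]]].
    exists l. split; [auto | split; [auto|]].
    intros k. rewrite HP, <- Hiff, Z2Nat.id by lia. lia.
Qed.

Lemma lt_IZR_Int_part X k : X < IZR k <-> (Int_part X < k)%Z.
Proof.
  pose proof (Int_part_bounds X). split; intros Hk.
  - apply lt_IZR. lra.
  - apply IZR_lt_succ_le in Hk. lra.
Qed.

Lemma IZR_le_Int_part k Y : IZR k <= Y <-> (k <= Int_part Y)%Z.
Proof.
  pose proof (Int_part_bounds Y). split; intros Hk.
  - destruct (Z.le_gt_cases k (Int_part Y)) as [|Hlt]; auto.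
    apply IZR_lt_succ_le in Hlt. lra.
  - apply IZR_le in Hk. lra.
Qed.

(* [dcount th x = floor X - floor (-X)] with [X = (x - th) / 2π] is odd between two crossings
   [th + 2πk] and even on them; it changes by [2] across each crossing. *)
Definition dcount (th x : R) : Z :=
  (Int_part ((x - th) / (2 * PI)) - Int_part (- ((x - th) / (2 * PI))))%Z.

Lemma crossing_cmp th u k :
  (u < th + 2 * PI * IZR k <-> (u - th) / (2 * PI) < IZR k) /\
  (u <= th + 2 * PI * IZR k <-> (u - th) / (2 * PI) <= IZR k) /\
  (th + 2 * PI * IZR k < u <-> IZR k < (u - th) / (2 * PI)) /\
  (th + 2 * PI * IZR k <= u <-> IZR k <= (u - th) / (2 * PI)).
Proof.
  pose proof PI_RGT_0.
  assert (E : u - (th + 2 * PI * IZR k) = 2 * PI * ((u - th) / (2 * PI) - IZR k))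
    by (field; lra).
  repeat split; intros; nra.
Qed.

Lemma half_count_dcount th x y : x < y ->
  (INR (zcard (fun k => x < th + 2 * PI * IZR k < y)) +
   INR (zcard (fun k => x <= th + 2 * PI * IZR k <= y))) / 2
  = (IZR (dcount th y) - IZR (dcount th x)) / 2.
Proof.
  intros Hxy. unfold dcount. set (X := (x - th) / (2 * PI)). set (Y := (y - th) / (2 * PI)).
  assert (HXY : X < Y) by (unfold X, Y, Rdiv; apply Rmult_lt_compat_r;
                           [apply Rinv_0_lt_compat; pose proof PI_RGT_0 | ]; lra).
  assert (Cx : forall k, (x < th + 2 * PI * IZR k <-> (Int_part X < k)%Z) /\
                         (x <= th + 2 * PI * IZR k <-> (- k <= Int_part (- X))%Z)).
  { intros k. destruct (crossing_cmp th x k) as [-> [-> _]]. fold X.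
    rewrite lt_IZR_Int_part, <- IZR_le_Int_part, opp_IZR. split; [reflexivity | split; lra]. }
  assert (Cy : forall k, (th + 2 * PI * IZR k < y <-> (Int_part (- Y) < - k)%Z) /\
                         (th + 2 * PI * IZR k <= y <-> (k <= Int_part Y)%Z)).
  { intros k. destruct (crossing_cmp th y k) as [_ [_ [-> ->]]]. fold Y.
    rewrite <- lt_IZR_Int_part, <- IZR_le_Int_part, opp_IZR. split; [split; lra | reflexivity]. }
  pose proof (Int_part_bounds X). pose proof (Int_part_bounds Y).
  pose proof (Int_part_bounds (- X)). pose proof (Int_part_bounds (- Y)).
  rewrite (zcard_interval _ (Int_part X + 1) (- Int_part (- Y) - 1)).
  2:{ enough (Int_part X < - Int_part (- Y))%Z by lia. apply lt_IZR. rewrite opp_IZR. lra. }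
  2:{ intros k. rewrite (proj1 (Cx k)), (proj1 (Cy k)). lia. }
  rewrite (zcard_interval _ (- Int_part (- X)) (Int_part Y)).
  2:{ enough (- Int_part (- X) < Int_part Y + 2)%Z by lia.
      apply lt_IZR. rewrite plus_IZR, opp_IZR. simpl. lra. }
  2:{ intros k. rewrite (proj2 (Cx k)), (proj2 (Cy k)). lia. }
  rewrite <- plus_IZR, <- minus_IZR. do 2 f_equal. lia.
Qed.

Lemma bracket_dcount th x y : bracket th x y = (IZR (dcount th y) - IZR (dcount th x)) / 2.
Proof.
  unfold bracket. destruct (Rlt_dec x y) as [H|H].
  - apply half_count_dcount; auto.
  - destruct (Rlt_dec y x) as [H'|H'].
    + rewrite half_count_dcount by auto. field.
    + replace y with x by lra. field.
Qed.

(* [stair et z] increases linearly by [1] on [[n, n + et/π]] and is constant on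
   [[n + et/π, n + 1]]. *)
Definition stair (et z : R) : R :=
  IZR (Int_part z) + Rmin 1 ((z - IZR (Int_part z)) * (PI / et)).

(* [ramp th et] is a continuous version of the number of crossings [th + 2πk] below [x]:
   it rises from [k] to [k + 1] on [[th + 2πk - et, th + 2πk + et]], taking the value
   [k + 1/2] at the crossing itself. *)
Definition ramp (th et x : R) : R := stair et ((x - th + et) / (2 * PI)).

Definition crossing_isolated (th et x : R) : Prop :=
  forall k : Z, Rabs (x - th - 2 * PI * IZR k) < et -> x = th + 2 * PI * IZR k.

Lemma Int_part_shift z k : Int_part (z + IZR k) = (Int_part z + k)%Z.
Proof. apply Int_part_unique. rewrite plus_IZR. pose proof (Int_part_bounds z); lra. Qed.

Lemma Int_part_le z1 z2 : z1 <= z2 -> (Int_part z1 <= Int_part z2)%Z.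
Proof.
  intros H. destruct (Z.le_gt_cases (Int_part z1) (Int_part z2)) as [|Hlt]; auto.
  pose proof (Int_part_bounds z1). pose proof (Int_part_bounds z2).
  apply IZR_lt_succ_le in Hlt. lra.
Qed.

Lemma stair_mono_lip et z1 z2 : 0 < et <= PI -> z1 <= z2 ->
  0 <= stair et z2 - stair et z1 <= (PI / et) * (z2 - z1).
Proof.
  intros Het Hz. unfold stair.
  assert (HL : 1 <= PI / et).
  { apply Rmult_le_reg_r with et; [lra|]. unfold Rdiv. rewrite Rmult_assoc, Rinv_l by lra. lra. }
  set (L := PI / et) in *.
  pose proof (Int_part_bounds z1). pose proof (Int_part_bounds z2).
  pose proof (Int_part_le _ _ Hz) as Hk.
  set (k1 := Int_part z1) in *. set (k2 := Int_part z2) in *.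
  set (w1 := z1 - IZR k1). set (w2 := z2 - IZR k2).
  assert (0 <= w1 < 1) by (unfold w1; lra). assert (0 <= w2 < 1) by (unfold w2; lra).
  replace z2 with (IZR k2 + w2) by (unfold w2; ring).
  replace z1 with (IZR k1 + w1) by (unfold w1; ring).
  destruct (Z.eq_dec k1 k2) as [E|E].
  - rewrite E in *. assert (w1 <= w2) by (unfold w1, w2; rewrite <- E; lra).
    unfold Rmin; repeat destruct Rle_dec; split; nra.
  - assert (IZR k1 + 1 <= IZR k2) by (apply IZR_lt_succ_le; lia).
    unfold Rmin; repeat destruct Rle_dec; split; nra.
Qed.

Lemma ramp_shift th et x k : ramp th et (x + 2 * PI * IZR k) = ramp th et x + IZR k.
Proof.
  unfold ramp, stair.
  replace ((x + 2 * PI * IZR k - th + et) / (2 * PI)) with ((x - th + et) / (2 * PI) + IZR k)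
    by (field; apply PI_neq0).
  rewrite Int_part_shift, plus_IZR.
  set (z := (x - th + et) / (2 * PI)).
  replace (z + IZR k - (IZR (Int_part z) + IZR k)) with (z - IZR (Int_part z)) by ring. ring.
Qed.

Lemma ramp_lip th et x y : 0 < et <= PI ->
  Rabs (ramp th et x - ramp th et y) <= Rabs (x - y) / (2 * et).
Proof.
  intros Het. pose proof PI_RGT_0.
  assert (Hmono : forall x y, x <= y ->
            0 <= ramp th et y - ramp th et x <= (y - x) / (2 * et)).
  { intros u v Huv. unfold ramp.
    assert (Hz : (u - th + et) / (2 * PI) <= (v - th + et) / (2 * PI)).
    { unfold Rdiv. apply Rmult_le_compat_r; [left; apply Rinv_0_lt_compat |]; lra. }
    pose proof (stair_mono_lip et _ _ Het Hz) as [H1 H2]. split; auto.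
    replace ((v - u) / (2 * et))
      with (PI / et * ((v - th + et) / (2 * PI) - (u - th + et) / (2 * PI))) by (field; lra).
    exact H2. }
  destruct (Rle_dec x y) as [Hxy|Hxy].
  - destruct (Hmono x y Hxy). rewrite !Rabs_left1 by lra. lra.
  - destruct (Hmono y x ltac:(lra)). rewrite !Rabs_pos_eq by lra. lra.
Qed.

Lemma ramp_plateau th et x k : 0 < et <= PI ->
  th + 2 * PI * IZR k + et <= x <= th + 2 * PI * (IZR k + 1) - et ->
  ramp th et x = IZR k + 1.
Proof.
  intros Het Hx. pose proof PI_RGT_0. unfold ramp, stair.
  set (z := (x - th + et) / (2 * PI)).
  assert (Ez : 2 * PI * z = x - th + et) by (unfold z; field; lra).
  assert (Hlo : IZR k + et / PI <= z).
  { apply Rmult_le_reg_l with (2 * PI); [lra|].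
    replace (2 * PI * (IZR k + et / PI)) with (2 * PI * IZR k + 2 * et) by (field; lra). lra. }
  assert (Hhi : z <= IZR k + 1) by (apply Rmult_le_reg_l with (2 * PI); lra).
  assert (Hpos : 0 < et / PI) by (apply Rdiv_lt_0_compat; lra).
  destruct (Req_dec z (IZR k + 1)) as [E|E].
  - rewrite E, (Int_part_unique _ (k + 1)) by (rewrite plus_IZR; lra).
    rewrite plus_IZR, Rminus_diag, Rmult_0_l, Rmin_right by lra. ring.
  - rewrite (Int_part_unique z k) by lra.
    rewrite Rmin_left; [reflexivity|].
    replace (PI / et) with (/ (et / PI)) by (field; lra).
    apply Rmult_le_reg_r with (et / PI); auto.
    rewrite Rmult_assoc, Rinv_l by lra. lra.
Qed.

Lemma ramp_crossing th et k : 0 < et <= PI ->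
  ramp th et (th + 2 * PI * IZR k) = IZR k + / 2.
Proof.
  intros Het. pose proof PI_RGT_0. unfold ramp, stair.
  replace ((th + 2 * PI * IZR k - th + et) / (2 * PI)) with (IZR k + et / (2 * PI))
    by (field; lra).
  assert (0 < et / (2 * PI) <= / 2).
  { split; [apply Rdiv_lt_0_compat; lra|].
    apply Rmult_le_reg_l with (2 * PI); [lra|].
    replace (2 * PI * (et / (2 * PI))) with et by (field; lra). lra. }
  rewrite (Int_part_unique _ k) by lra.
  replace ((IZR k + et / (2 * PI) - IZR k) * (PI / et)) with (/ 2) by (field; lra).
  rewrite Rmin_right by lra. reflexivity.
Qed.

Lemma dcount_crossing th k : dcount th (th + 2 * PI * IZR k) = (2 * k)%Z.
Proof.
  unfold dcount.
  replace ((th + 2 * PI * IZR k - th) / (2 * PI)) with (IZR k) by (field; apply PI_neq0).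
  rewrite <- opp_IZR, (Int_part_unique (IZR k) k), (Int_part_unique (IZR (- k)) (- k)) by lra.
  lia.
Qed.

Lemma dcount_between th x k : th + 2 * PI * IZR k < x < th + 2 * PI * (IZR k + 1) ->
  dcount th x = (2 * k + 1)%Z.
Proof.
  intros Hx. unfold dcount.
  destruct (crossing_cmp th x k) as [_ [_ [Hk _]]].
  destruct (crossing_cmp th x (k + 1)) as [Hk1 _].
  rewrite plus_IZR in Hk1.
  set (X := (x - th) / (2 * PI)) in *.
  assert (HX : IZR k < X < IZR k + 1) by (split; [apply Hk | apply Hk1]; lra).
  rewrite (Int_part_unique X k), (Int_part_unique (- X) (- k - 1))
    by (rewrite ?minus_IZR, ?opp_IZR; simpl; lra).
  lia.
Qed.

Lemma ramp_dcount th et x : 0 < et <= PI -> crossing_isolated th et x ->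
  2 * ramp th et x = IZR (dcount th x) + 1.
Proof.
  intros Het Hiso. pose proof PI_RGT_0.
  set (k := Int_part ((x - th) / (2 * PI))).
  pose proof (Int_part_bounds ((x - th) / (2 * PI))) as Hk. fold k in Hk.
  destruct (crossing_cmp th x k) as [_ [_ [_ Hge]]].
  destruct (crossing_cmp th x (k + 1)) as [Hlt _]. rewrite plus_IZR in Hlt.
  destruct (Req_dec x (th + 2 * PI * IZR k)) as [Ex|Ex].
  - rewrite Ex, ramp_crossing, dcount_crossing, mult_IZR by auto. simpl. lra.
  - assert (Hx : th + 2 * PI * IZR k < x < th + 2 * PI * (IZR k + 1))
      by (split; [destruct (Rle_lt_or_eq _ _ (proj2 Hge ltac:(lra))) | apply Hlt]; lra).
    assert (Hfar : forall m, x <> th + 2 * PI * IZR m -> et <= Rabs (x - th - 2 * PI * IZR m))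
      by (intros m Hm; destruct (Rlt_le_dec (Rabs (x - th - 2 * PI * IZR m)) et);
          [exfalso; apply Hm, Hiso | ]; auto).
    pose proof (Hfar k Ex) as H1. pose proof (Hfar (k + 1)%Z) as H2.
    rewrite plus_IZR in H2. specialize (H2 ltac:(lra)).
    rewrite Rabs_pos_eq in H1 by lra. rewrite Rabs_left in H2 by (simpl; lra). simpl in H2.
    rewrite (ramp_plateau th et x k), (dcount_between th x k), plus_IZR, mult_IZR by (auto; lra).
    simpl. lra.
Qed.

Lemma bracket_ramp th et x y : 0 < et <= PI ->
  crossing_isolated th et x -> crossing_isolated th et y ->
  bracket th x y = ramp th et y - ramp th et x.
Proof.
  intros Het Hx Hy. rewrite bracket_dcount.
  pose proof (ramp_dcount th et x Het Hx). pose proof (ramp_dcount th et y Het Hy). lra.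
Qed.

Definition admissible (th et : R) : Prop := 0 < et <= PI /\ et < th /\ th + et < 2 * PI.

Definition quiet_radius (th et : R) : R := Rmin (th - et) (2 * PI - th - et).

Lemma quiet_radius_bounds th et : admissible th et -> 0 < quiet_radius th et < PI.
Proof. intros [? [? ?]]. unfold quiet_radius, Rmin; destruct Rle_dec; lra. Qed.

Lemma ramp_quiet th et x : admissible th et -> Rabs x < quiet_radius th et -> ramp th et x = 0.
Proof.
  intros Hp Hx. pose proof Hp as [Het _]. unfold quiet_radius, Rmin in Hx.
  apply Rabs_def2 in Hx.
  replace 0 with (IZR (-1) + 1) by (simpl; ring). apply ramp_plateau; auto.
  simpl. destruct Rle_dec; lra.
Qed.

(* Only its value modulo [2π] is meaningful. *)
Definition angle_ramp (th et : R) (z : T) : R := 2 * PI * ramp th et (argT z).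

Lemma Rabs_argT_le_distT z : Rabs (argT z) <= distT z oneT.
Proof.
  rewrite distT_argT, argT_oneT, Rminus_0_r. pose proof (argT_bounds z). pose proof PI_RGT_0.
  destruct (Req_dec (argT z) PI) as [E|E].
  - rewrite E, (wrap_eq PI (- PI)), Rabs_Ropp; [lra| |lra].
    exists 1%Z; simpl; ring.
  - rewrite (wrap_eq (argT z) (argT z)); [lra | rewrite Rminus_diag; apply in2PIZ_0 | lra].
Qed.

Lemma angle_ramp_oneT th et : admissible th et -> angle_ramp th et oneT = 0.
Proof.
  intros Hp. unfold angle_ramp. rewrite argT_oneT, ramp_quiet; [ring | auto|].
  rewrite Rabs_R0. apply quiet_radius_bounds; auto.
Qed.

Lemma angle_ramp_supported th et : admissible th et ->
  supported_far distT oneT (angle_ramp th et) (quiet_radius th et).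
Proof.
  intros Hp z Hz. destruct (Rlt_le_dec (distT z oneT) (quiet_radius th et)) as [Hlt|]; auto.
  exfalso. apply Hz. unfold angle_ramp. rewrite ramp_quiet; [ring | auto|].
  pose proof (Rabs_argT_le_distT z). lra.
Qed.

Lemma ramp_supported th et : admissible th et ->
  supported_far distR 0 (ramp th et) (quiet_radius th et).
Proof.
  intros Hp x Hx. unfold distR. rewrite Rminus_0_r.
  destruct (Rlt_le_dec (Rabs x) (quiet_radius th et)); auto.
  exfalso. apply Hx, ramp_quiet; auto.
Qed.

Lemma angle_ramp_expT th et x : in2PIZ (angle_ramp th et (expT x) - 2 * PI * ramp th et x).
Proof.
  destruct (expT_eq_in2PIZ _ _ (expT_argT (expT x))) as [m Hm]. unfold angle_ramp.
  replace (argT (expT x)) with (x + 2 * PI * IZR m) by lra. rewrite ramp_shift.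
  exists m. ring.
Qed.

Lemma angle_ramp_lip th et z w : admissible th et ->
  Rabs (wrap (angle_ramp th et z - angle_ramp th et w)) <= (PI / et) * distT z w.
Proof.
  intros [Het _]. pose proof PI_RGT_0.
  rewrite distT_argT. unfold angle_ramp. set (a := argT z). set (b := argT w).
  destruct (wrap_in2PIZ (a - b)) as [k Hk].
  rewrite (wrap_shift _ (2 * PI * (ramp th et a - ramp th et (b + 2 * PI * IZR k))))
    by (rewrite ramp_shift; exists k; ring).
  eapply Rle_trans; [apply Rabs_wrap_le|].
  rewrite Rabs_mult, (Rabs_pos_eq (2 * PI)) by lra.
  eapply Rle_trans; [apply Rmult_le_compat_l; [lra | apply ramp_lip; auto]|].
  replace (a - (b + 2 * PI * IZR k)) with (wrap (a - b)) by lra.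
  right. field. lra.
Qed.

Lemma distR_ge0 x y : 0 <= distR x y.
Proof. apply Rabs_pos. Qed.

Definition Gsum (th et : R) (S : rigged T) : R := rsum (angle_ramp th et) S.
Definition Vsum (th et : R) (St : rigged R) : R := rsum (ramp th et) St.

Section Functionals.

Variables th et : R.
Hypothesis Hp : admissible th et.

Let Hc : 0 < quiet_radius th et := proj1 (quiet_radius_bounds th et Hp).

Lemma Gsum_spec S u : in_S1 distT oneT S -> enumerates S u ->
  is_finsum (fun j => angle_ramp th et (u j)) (Gsum th et S).
Proof.
  intros HS Hu. apply (rsum_spec distT oneT distT_ge0 _ S (quiet_radius th et)); auto.
  - apply angle_ramp_supported; auto.
  - apply enumerates_enum_far; auto.
Qed.

Lemma Vsum_spec St u : in_S1 distR 0 St -> enum_far distR 0 St (quiet_radius th et) u ->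
  is_finsum (fun j => ramp th et (u j)) (Vsum th et St).
Proof.
  intros HS Hu. apply (rsum_spec distR 0 distR_ge0 _ St (quiet_radius th et)); auto.
  apply ramp_supported; auto.
Qed.

Lemma Gsum_Vsum_in2PIZ S St : in_S1 distT oneT S -> in_S1 distR 0 St -> proj_eq St S ->
  in2PIZ (Gsum th et S - 2 * PI * Vsum th et St).
Proof.
  intros HS HSt [e [He HT]].
  assert (HeT : enumerates S (fun j => expT (e j))).
  { intros z. eapply has_mult_iff; [|apply (HT z)]. intros j; split; intros Hj.
    - apply T_eq. exact Hj.
    - rewrite <- Hj. reflexivity. }
  pose proof (Gsum_spec S _ HS HeT) as H1.
  pose proof (Vsum_spec St e HSt (enumerates_enum_far distR 0 St _ e He)) as H2.
  destruct (is_finsum_common _ _ _ _ H1 H2) as [M [-> ->]].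
  rewrite <- psum_scal, <- psum_minus. apply in2PIZ_psum. intros j. apply angle_ramp_expT.
Qed.

Lemma Gsum_base S : in_S1 distT oneT S -> is_base_rigged oneT S -> Gsum th et S = 0.
Proof.
  intros HS [_ Hz]. pose proof HS as [_ [_ [e [He _]]]].
  apply (is_finsum_unique _ _ _ (Gsum_spec S e HS He)). exists O. split; [|reflexivity].
  intros j _. destruct (classic (e j = oneT)) as [E|E].
  - rewrite E. apply angle_ramp_oneT; auto.
  - exfalso. pose proof (He (e j)) as Hm. rewrite (Hz _ E) in Hm.
    apply (has_mult_nonzero _ _ j Hm); reflexivity.
Qed.

Lemma Gsum_wrap_lt S S' eps : in_S1 distT oneT S -> in_S1 distT oneT S' ->
  rdist_lt distT S S' eps -> Rabs (wrap (Gsum th et S - Gsum th et S')) < (PI / et) * eps.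
Proof.
  intros HS HS' Hd. pose proof Hp as [[Het _] _]. pose proof PI_RGT_0.
  destruct (rsum_sub_psum distT oneT distT_ge0 (angle_ramp th et) S S' _ eps HS HS' Hc
              (angle_ramp_supported th et Hp) Hd) as [s [u [M [E Hlt]]]].
  unfold Gsum. rewrite E. eapply Rle_lt_trans; [apply Rabs_wrap_psum|].
  eapply Rle_lt_trans; [apply (psum_le _ (fun j => (PI / et) * distT (s j) (u j)));
                        intros; apply angle_ramp_lip; auto|].
  rewrite psum_scal. apply Rmult_lt_compat_l; auto. apply Rdiv_lt_0_compat; lra.
Qed.

Lemma Vsum_lt St St' eps : in_S1 distR 0 St -> in_S1 distR 0 St' ->
  rdist_lt distR St St' eps -> Rabs (Vsum th et St - Vsum th et St') < eps / (2 * et).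
Proof.
  intros HS HS' Hd. pose proof Hp as [Het _].
  destruct (rsum_sub_psum distR 0 distR_ge0 (ramp th et) St St' _ eps HS HS' Hc
              (ramp_supported th et Hp) Hd) as [s [u [M [E Hlt]]]].
  unfold Vsum. rewrite E. eapply Rle_lt_trans; [apply psum_abs|].
  eapply Rle_lt_trans; [apply (psum_le _ (fun j => / (2 * et) * distR (s j) (u j)));
                        intros; rewrite Rmult_comm; apply ramp_lip; auto|].
  rewrite psum_scal. replace (eps / (2 * et)) with (/ (2 * et) * eps) by (unfold Rdiv; ring).
  apply Rmult_lt_compat_l; auto. apply Rinv_0_lt_compat; lra.
Qed.

Lemma Gsum_homotopy_cont a b F :
  (forall r t, a <= r <= b -> 0 <= t <= 1 -> in_S1 distT oneT (F r t)) -> rhom_cont distT a b F ->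
  forall r0 t0, a <= r0 <= b -> 0 <= t0 <= 1 -> forall eps, 0 < eps -> exists delta, 0 < delta /\
    forall r t, a <= r <= b -> 0 <= t <= 1 -> Rabs (r - r0) < delta -> Rabs (t - t0) < delta ->
      Rabs (wrap (Gsum th et (F r t) - Gsum th et (F r0 t0))) < eps.
Proof.
  intros HF Hcont r0 t0 Hr0 Ht0 eps Heps. pose proof PI_RGT_0. pose proof Hp as [Het _].
  destruct (Hcont r0 t0 Hr0 Ht0 (eps * et / PI)) as [d [Hd Hd']];
    [apply Rdiv_lt_0_compat; nra|].
  exists d. split; auto. intros r t Hr Ht Hrr Htt.
  eapply Rlt_le_trans; [apply Gsum_wrap_lt; auto|]. right. field. lra.
Qed.

Lemma Vsum_path_cont a b St :
  (forall r, a <= r <= b -> in_S1 distR 0 (St r)) -> rpath_cont distR a b St ->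
  real_cont_on a b (fun r => Vsum th et (St r)).
Proof.
  intros HS Hcont r0 Hr0 eps Heps. pose proof Hp as [Het _].
  destruct (Hcont r0 Hr0 (2 * et * eps)) as [d [Hd Hd']]; [nra|].
  exists d. split; auto. intros r Hr Hrr.
  eapply Rlt_le_trans; [apply Vsum_lt; auto|]. right. field. lra.
Qed.

End Functionals.

(** * The μ-invariant as a difference of crossing counts *)

Lemma crossing_isolated_2PIZ th et m : admissible th et -> crossing_isolated th et (2 * PI * IZR m).
Proof.
  intros [Het [H1 H2]] k Hk. exfalso. pose proof PI_RGT_0.
  replace (2 * PI * IZR m - th - 2 * PI * IZR k) with (2 * PI * IZR (m - k) - th) in Hk
    by (rewrite minus_IZR; ring).
  apply Rabs_def2 in Hk.
  destruct (Z.le_gt_cases (m - k) 0) as [h|h];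
    [apply IZR_le in h | assert (1 <= IZR (m - k)) by (apply IZR_le; lia)]; nra.
Qed.

Definition isolates (th et : R) (F1 : rigged T) : Prop :=
  forall z, F1 z <> Fin 0 -> distT z (expT th) < et -> z = expT th.

Lemma crossing_isolated_of_isolates th et F1 x : admissible th et -> isolates th et F1 ->
  F1 (expT x) <> Fin 0 -> crossing_isolated th et x.
Proof.
  intros Hp Hiso Hx k Hk. pose proof PI_RGT_0. pose proof Hp as [Het _].
  assert (Hd : distT (expT x) (expT th) < et)
    by (rewrite distT_expT; eapply Rle_lt_trans; [apply (Rabs_wrap_le_shift _ k) | exact Hk]).
  pose proof (expT_eq_in2PIZ _ _ (Hiso _ Hx Hd)) as Hm.
  assert (Hm' : in2PIZ (x - th - 2 * PI * IZR k)).
  { apply in2PIZ_sub; [exact Hm | exists k; reflexivity]. }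
  apply in2PIZ_small in Hm'; lra.
Qed.

Lemma distT_expT_oneT th : 0 < th < 2 * PI -> Rmin th (2 * PI - th) <= distT (expT th) oneT.
Proof.
  intros Hth. pose proof PI_RGT_0. rewrite oneT_expT, distT_expT, Rminus_0_r.
  destruct (Rlt_le_dec th PI).
  - rewrite (wrap_eq th th), Rabs_pos_eq by (lra || (rewrite Rminus_diag; apply in2PIZ_0)).
    apply Rmin_l.
  - rewrite (wrap_eq th (th - 2 * PI)), Rabs_left1 by (lra || (exists 1%Z; simpl; ring)).
    pose proof (Rmin_r th (2 * PI - th)). lra.
Qed.

Lemma distT_separated_prefix (s : nat -> T) p M :
  exists e, 0 < e /\ forall i, (i < M)%nat -> s i <> p -> e <= distT (s i) p.
Proof.
  induction M as [|M [e [He HM]]]; [exists 1; split; [lra | intros; lia]|].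
  destruct (classic (s M = p)) as [Q|Q].
  - exists e; split; auto. intros i Hi Hne.
    destruct (Nat.eq_dec i M) as [->|]; [tauto | apply HM; auto; lia].
  - assert (0 < distT (s M) p).
    { destruct (distT_ge0 (s M) p) as [|h]; auto. symmetry in h. apply distT_eq0 in h. tauto. }
    exists (Rmin e (distT (s M) p)). split; [unfold Rmin; destruct Rle_dec; lra|].
    intros i Hi Hne. destruct (Nat.eq_dec i M) as [->|]; [apply Rmin_r|].
    eapply Rle_trans; [apply Rmin_l | apply HM; auto; lia].
Qed.

(* Only finitely many points of [F1] lie away from [1]; [expT th] is away from [1]. *)
Lemma exists_isolating_eta th F1 : 0 < th < 2 * PI -> in_S1 distT oneT F1 ->
  exists et, admissible th et /\ isolates th et F1.
Proof.
  intros Hth HF. pose proof PI_RGT_0.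
  set (rho := Rmin th (2 * PI - th) / 2).
  assert (Hrho : 0 < rho /\ rho <= th / 2 /\ rho <= (2 * PI - th) / 2)
    by (unfold rho, Rmin; destruct Rle_dec; lra).
  pose proof HF as [_ [_ [s [Hs Hex]]]].
  destruct (tail_dist_lt distT oneT distT_ge0 s rho Hex (proj1 Hrho)) as [N HN].
  destruct (distT_separated_prefix s (expT th) N) as [e [He HeN]].
  exists (Rmin rho e). split.
  { pose proof (Rmin_l rho e). assert (0 < Rmin rho e) by (unfold Rmin; destruct Rle_dec; lra).
    repeat split; lra. }
  intros z Hz Hd. pose proof (Rmin_l rho e). pose proof (Rmin_r rho e).
  destruct (Rlt_le_dec (distT z oneT) rho) as [h|h].
  - exfalso. pose proof (distT_triang (expT th) z oneT). rewrite distT_sym in Hd.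
    pose proof (distT_expT_oneT th Hth). unfold rho in *. lra.
  - destruct (far_mult_finite distT oneT F1 s rho N Hs HN z h) as [m [Em Hlt]].
    pose proof (Hs z) as Hsz. rewrite Em in Hsz.
    destruct (has_mult_witness _ _ Hsz ltac:(rewrite <- Em; auto)) as [i Hi].
    destruct (classic (z = expT th)) as [|Q]; auto. exfalso.
    assert (e <= distT (s i) (expT th)) by (apply HeN; [apply Hlt | rewrite Hi]; auto).
    rewrite Hi in *. lra.
Qed.

Lemma mu_data_support a b P St thf r j : mu_data a b P St thf -> a <= r <= b ->
  thf j r <> 0 -> P r (expT (thf j r)) <> Fin 0.
Proof.
  intros [_ [_ [Hproj [_ Hth]]]] Hr Hne.
  destruct (Hproj r Hr) as [e [He HT]]. destruct (Hth r Hr) as [_ Hm].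
  pose proof (has_mult_nonzero _ _ j (Hm _ Hne) eq_refl) as Hnz.
  destruct (has_mult_witness _ _ (He _) Hnz) as [i Hi].
  apply (has_mult_nonzero _ _ i (HT (expT (thf j r)))). simpl. rewrite Hi. reflexivity.
Qed.

Lemma mu_sum_Vsum a b th et P F1 St thf : admissible th et -> isolates th et F1 -> a < b ->
  is_base_rigged oneT (P a) -> (forall z, P b z = F1 z) -> mu_data a b P St thf ->
  mu_sum a b th thf = Vsum th et (St b) - Vsum th et (St a).
Proof.
  intros Hp Hiso Hab [_ Hbase] HPb Hm. pose proof Hm as [HS [_ [_ [_ Hth]]]].
  assert (Ha : a <= a <= b) by lra. assert (Hb : a <= b <= b) by lra.
  assert (Iso0 : crossing_isolated th et 0)
    by (replace 0 with (2 * PI * IZR 0) by (simpl; ring); apply crossing_isolated_2PIZ; auto).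
  assert (Isoa : forall j, crossing_isolated th et (thf j a)).
  { intros j. destruct (Req_dec (thf j a) 0) as [->|Hne]; auto.
    pose proof (mu_data_support _ _ _ _ _ a j Hm Ha Hne) as Hsupp.
    destruct (classic (expT (thf j a) = oneT)) as [Q|Q]; [|exfalso; apply Hsupp, Hbase, Q].
    rewrite oneT_expT in Q. destruct (expT_eq_in2PIZ _ _ Q) as [m Hm'].
    replace (thf j a) with (2 * PI * IZR m) by lra. apply crossing_isolated_2PIZ; auto. }
  assert (Isob : forall j, crossing_isolated th et (thf j b)).
  { intros j. destruct (Req_dec (thf j b) 0) as [->|Hne]; auto.
    apply (crossing_isolated_of_isolates th et F1); auto.
    rewrite <- HPb. apply (mu_data_support _ _ _ _ _ b j Hm Hb Hne). }
  assert (Hfar : forall r, a <= r <= b ->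
            enum_far distR 0 (St r) (quiet_radius th et) (fun j => thf j r)).
  { intros r Hr x Hx. apply Hth; auto. intros ->.
    unfold distR in Hx. rewrite Rminus_0_r, Rabs_R0 in Hx. pose proof (quiet_radius_bounds th et Hp). lra. }
  pose proof (Vsum_spec th et Hp _ _ (HS a Ha) (Hfar a Ha)) as Va.
  pose proof (Vsum_spec th et Hp _ _ (HS b Hb) (Hfar b Hb)) as Vb.
  unfold mu_sum. rewrite (Series_ext _ (fun j => ramp th et (thf j b) - ramp th et (thf j a)))
    by (intros j; apply bracket_ramp; [apply Hp | auto | auto]).
  apply is_finsum_Series, is_finsum_sub; auto.
Qed.

(** * Lifting homotopies of angles *)

Lemma wrap_square A B C D :
  Rabs (wrap (B - A)) < PI / 2 -> Rabs (wrap (D - B)) < PI / 2 ->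
  Rabs (wrap (C - A)) < PI / 2 -> Rabs (wrap (D - C)) < PI / 2 ->
  wrap (B - A) + wrap (D - B) = wrap (C - A) + wrap (D - C).
Proof.
  intros H1 H2 H3 H4. pose proof PI_RGT_0.
  assert (Z : in2PIZ ((wrap (B - A) + wrap (D - B)) - (wrap (C - A) + wrap (D - C)))).
  { pose proof (wrap_in2PIZ (B - A)). pose proof (wrap_in2PIZ (D - B)).
    pose proof (wrap_in2PIZ (C - A)). pose proof (wrap_in2PIZ (D - C)).
    replace ((wrap (B - A) + wrap (D - B)) - (wrap (C - A) + wrap (D - C))) with
      (((C - A) - wrap (C - A)) + ((D - C) - wrap (D - C))
       - ((B - A) - wrap (B - A)) - ((D - B) - wrap (D - B))) by ring.
    apply in2PIZ_sub; [apply in2PIZ_sub; [apply in2PIZ_add|]|]; auto. }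
  apply in2PIZ_small in Z; [lra|].
  apply Rabs_def2 in H1, H2, H3, H4. apply Rabs_def1; lra.
Qed.

Section Grid.

(* [P i k] is an angle (modulo [2π]) at the node [(i, k)] of an [n x n] grid. *)
Variables (P : nat -> nat -> R) (n : nat).

Definition row_winding (k : nat) : R := psum (fun i => wrap (P (S i) k - P i k)) n.

Lemma row_winding_lift (W : nat -> R) k :
  (forall i, (i <= n)%nat -> in2PIZ (P i k - 2 * PI * W i)) ->
  (forall i, (i < n)%nat -> Rabs (W (S i) - W i) < / 2) ->
  row_winding k = 2 * PI * (W n - W O).
Proof.
  intros HW Hstep. pose proof PI_RGT_0. unfold row_winding.
  rewrite (psum_ext _ (fun i => 2 * PI * W (S i) - 2 * PI * W i)).
  { rewrite (psum_telescope (fun i => 2 * PI * W i)). ring. }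
  intros i Hi. apply wrap_eq.
  - replace (P (S i) k - P i k - (2 * PI * W (S i) - 2 * PI * W i))
      with ((P (S i) k - 2 * PI * W (S i)) - (P i k - 2 * PI * W i)) by ring.
    apply in2PIZ_sub; apply HW; lia.
  - specialize (Hstep i Hi). apply Rabs_def2 in Hstep. split; nra.
Qed.

Lemma row_winding_step k :
  (forall i, (i < n)%nat -> Rabs (wrap (P (S i) k - P i k)) < PI / 2) ->
  (forall i, (i < n)%nat -> Rabs (wrap (P (S i) (S k) - P i (S k))) < PI / 2) ->
  (forall i, (i <= n)%nat -> Rabs (wrap (P i (S k) - P i k)) < PI / 2) ->
  P O (S k) = P O k -> P n (S k) = P n k ->
  row_winding k = row_winding (S k).
Proof.
  intros Hk HSk Hv H0 Hn.
  set (side := fun i => wrap (P i (S k) - P i k)).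
  assert (E : row_winding k - row_winding (S k) = psum (fun i => -1 * (side (S i) - side i)) n).
  { unfold row_winding. rewrite <- psum_minus. apply psum_ext. intros i Hi. unfold side.
    pose proof (wrap_square (P i k) (P (S i) k) (P i (S k)) (P (S i) (S k))
                  (Hk i Hi) (Hv (S i) Hi) (Hv i ltac:(lia)) (HSk i Hi)). lra. }
  rewrite psum_scal, (psum_telescope side) in E. unfold side in E.
  rewrite H0, Hn in E. replace (P n k - P n k) with 0 in E by ring.
  replace (P O k - P O k) with 0 in E by ring. rewrite wrap_0 in E. lra.
Qed.

End Grid.

(* Each small square has zero winding, so all rows of the grid wind by the same amount. *)
Lemma grid_lift (P : nat -> nat -> R) (W0 W1 : nat -> R) n :
  (forall i k, (i < n)%nat -> (k <= n)%nat -> Rabs (wrap (P (S i) k - P i k)) < PI / 2) ->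
  (forall i k, (i <= n)%nat -> (k < n)%nat -> Rabs (wrap (P i (S k) - P i k)) < PI / 2) ->
  (forall k, (k <= n)%nat -> P O k = 0) ->
  (forall k, (k <= n)%nat -> P n k = P n O) ->
  (forall i, (i <= n)%nat -> in2PIZ (P i O - 2 * PI * W0 i)) ->
  (forall i, (i <= n)%nat -> in2PIZ (P i n - 2 * PI * W1 i)) ->
  (forall i, (i < n)%nat -> Rabs (W0 (S i) - W0 i) < / 2) ->
  (forall i, (i < n)%nat -> Rabs (W1 (S i) - W1 i) < / 2) ->
  W0 n - W0 O = W1 n - W1 O.
Proof.
  intros Hh Hv Hleft Hright H0 H1 Hs0 Hs1. pose proof PI_RGT_0.
  assert (Hrows : forall k, (k <= n)%nat -> row_winding P n k = row_winding P n O).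
  { induction k as [|k IH]; intros Hk; auto. rewrite <- IH by lia. symmetry.
    apply row_winding_step; intros; try apply Hh; try apply Hv; try lia.
    - rewrite !Hleft by lia. reflexivity.
    - rewrite Hright, (Hright k) by lia. reflexivity. }
  pose proof (row_winding_lift P n W0 O H0 Hs0) as E0.
  pose proof (row_winding_lift P n W1 n H1 Hs1) as E1.
  rewrite Hrows in E1 by lia. apply Rmult_eq_reg_l with (2 * PI); lra.
Qed.

Lemma uniform_continuity_rect (a b : R) (D : R -> R -> R -> R -> R) :
  (forall r t r' t', D r t r' t' = D r' t' r t) ->
  (forall r t r' t' r'' t'', D r t r'' t'' <= D r t r' t' + D r' t' r'' t'') ->
  (forall r0 t0, a <= r0 <= b -> 0 <= t0 <= 1 -> forall eps, 0 < eps -> exists delta, 0 < delta /\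
     forall r t, a <= r <= b -> 0 <= t <= 1 -> Rabs (r - r0) < delta -> Rabs (t - t0) < delta ->
       D r t r0 t0 < eps) ->
  forall eps, 0 < eps -> exists delta, 0 < delta /\
    forall r t r' t', a <= r <= b -> 0 <= t <= 1 -> a <= r' <= b -> 0 <= t' <= 1 ->
      Rabs (r - r') < delta -> Rabs (t - t') < delta -> D r t r' t' < eps.
Proof.
  intros Hsym Htri Hc eps Heps.
  set (Good := fun u v d => 0 < d /\ (a <= u <= b -> 0 <= v <= 1 ->
     forall r t, a <= r <= b -> 0 <= t <= 1 -> Rabs (r - u) < d -> Rabs (t - v) < d ->
       D r t u v < eps / 2)).
  assert (HGood : forall u v, exists d, Good u v d).
  { intros u v. destruct (classic (a <= u <= b /\ 0 <= v <= 1)) as [[Hu Hv]|Hn].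
    - destruct (Hc u v Hu Hv (eps / 2) ltac:(lra)) as [d [Hd Hd']]. exists d. split; auto.
    - exists 1. split; [lra | intros; tauto]. }
  set (df := fun u v => epsilon (inhabits 1) (Good u v)).
  assert (Hdf : forall u v, Good u v (df u v)) by (intros; apply epsilon_spec, HGood).
  assert (Hpos : forall u v, 0 < df u v / 2) by (intros u v; destruct (Hdf u v); lra).
  set (delta := fun u v => mkposreal _ (Hpos u v)).
  destruct (compactness_value_2d a b 0 1 delta) as [d Hd].
  exists d. split; [apply cond_pos|].
  intros r t r' t' Hr Ht Hr' Ht' H1 H2.
  apply NNPP. intros Hneg. apply (Hd r t Hr Ht). intros [u [v [Hu [Hv [Hru [Htv Hdl]]]]]].
  apply Hneg. change (pos (delta u v)) with (df u v / 2) in *. destruct (Hdf u v) as [Hdp Huv].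
  assert (D r t u v < eps / 2) by (apply Huv; auto; lra).
  assert (D r' t' u v < eps / 2).
  { apply Huv; auto.
    - replace (r' - u) with ((r' - r) + (r - u)) by ring. eapply Rle_lt_trans; [apply Rabs_triang|].
      rewrite Rabs_minus_sym in H1. lra.
    - replace (t' - v) with ((t' - t) + (t - v)) by ring. eapply Rle_lt_trans; [apply Rabs_triang|].
      rewrite Rabs_minus_sym in H2. lra. }
  pose proof (Htri r t u v r' t') as Htr. rewrite (Hsym u v r' t') in Htr. lra.
Qed.

Lemma uniform_continuity_interval (a b : R) (V : R -> R) : real_cont_on a b V ->
  forall eps, 0 < eps -> exists delta, 0 < delta /\
    forall r r', a <= r <= b -> a <= r' <= b -> Rabs (r - r') < delta -> Rabs (V r - V r') < eps.
Proof.
  intros HV eps Heps.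
  destruct (uniform_continuity_rect a b (fun r _ r' _ => Rabs (V r - V r'))) with (eps := eps)
    as [d [Hd Hu]]; auto.
  - intros; apply Rabs_minus_sym.
  - intros. replace (V r - V r'') with ((V r - V r') + (V r' - V r'')) by ring. apply Rabs_triang.
  - intros r0 t0 Hr0 _ e He. destruct (HV r0 Hr0 e He) as [d [Hd Hd']].
    exists d; split; auto.
  - exists d; split; auto. intros r r' Hr Hr' Hrr. apply (Hu r 0 r' 0); auto; try lra.
    rewrite Rminus_0_r, Rabs_R0; auto.
Qed.

Lemma exists_fine_subdivision L d : 0 < d ->
  exists n : nat, (0 < n)%nat /\ L / INR n < d /\ 1 / INR n < d.
Proof.
  intros Hd. destruct (archimed (Rmax (L / d) (1 / d))) as [Hup _].
  pose proof (Rmax_l (L / d) (1 / d)). pose proof (Rmax_r (L / d) (1 / d)).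
  assert (Hpos : 0 < 1 / d) by (apply Rdiv_lt_0_compat; lra).
  assert (Hz : (0 < up (Rmax (L / d) (1 / d)))%Z) by (apply lt_IZR; simpl; lra).
  exists (Z.to_nat (up (Rmax (L / d) (1 / d)))).
  rewrite INR_IZR_INZ, Z2Nat.id by lia.
  set (N := IZR (up (Rmax (L / d) (1 / d)))) in *.
  assert (HN : 0 < N) by lra.
  assert (Hdiv : forall x, x / d < N -> x / N < d).
  { intros x Hx. replace (x / N) with ((x / d) * (d / N)) by (field; lra).
    apply Rlt_le_trans with (N * (d / N)); [|right; field; lra].
    apply Rmult_lt_compat_r; [apply Rdiv_lt_0_compat |]; lra. }
  split; [lia|]. split; apply Hdiv; lra.
Qed.

Lemma ratio_bounds i n : (0 < n)%nat -> (i <= n)%nat -> 0 <= INR i / INR n <= 1.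
Proof.
  intros Hn Hi. apply lt_0_INR in Hn. apply le_INR in Hi. pose proof (pos_INR i).
  split; [apply Rdiv_le_0_compat; lra|].
  apply Rmult_le_reg_r with (INR n); auto. unfold Rdiv. rewrite Rmult_assoc, Rinv_l by lra. lra.
Qed.

Lemma fine_grid a b d : a < b -> 0 < d ->
  exists n (rr tt : nat -> R), rr O = a /\ rr n = b /\ tt O = 0 /\ tt n = 1 /\
    (forall i, (i <= n)%nat -> a <= rr i <= b /\ 0 <= tt i <= 1) /\
    (forall i, Rabs (rr (S i) - rr i) < d /\ Rabs (tt (S i) - tt i) < d).
Proof.
  intros Hab Hd. destruct (exists_fine_subdivision (b - a) d Hd) as [n [Hn [Hh Hk]]].
  pose proof (lt_0_INR _ Hn) as HnR.
  exists n, (fun i => a + (b - a) * (INR i / INR n)), (fun k => INR k / INR n).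
  split; [simpl; unfold Rdiv; ring|]. split; [field; lra|].
  split; [simpl; unfold Rdiv; ring|]. split; [field; lra|]. split.
  - intros i Hi. pose proof (ratio_bounds i n Hn Hi). split; [split|]; nra.
  - intros i. rewrite S_INR. split.
    + replace (a + (b - a) * ((INR i + 1) / INR n) - (a + (b - a) * (INR i / INR n)))
        with ((b - a) / INR n) by (field; lra).
      rewrite Rabs_pos_eq; [lra | apply Rdiv_le_0_compat; lra].
    + replace ((INR i + 1) / INR n - INR i / INR n) with (1 / INR n) by (field; lra).
      rewrite Rabs_pos_eq; [lra | apply Rdiv_le_0_compat; lra].
Qed.

Lemma homotopy_lift a b (G : R -> R -> R) (V0 V1 : R -> R) : a < b ->
  (forall r0 t0, a <= r0 <= b -> 0 <= t0 <= 1 -> forall eps, 0 < eps -> exists delta, 0 < delta /\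
     forall r t, a <= r <= b -> 0 <= t <= 1 -> Rabs (r - r0) < delta -> Rabs (t - t0) < delta ->
       Rabs (wrap (G r t - G r0 t0)) < eps) ->
  real_cont_on a b V0 -> real_cont_on a b V1 ->
  (forall t, 0 <= t <= 1 -> G a t = 0) -> (forall t, 0 <= t <= 1 -> G b t = G b 0) ->
  (forall r, a <= r <= b -> in2PIZ (G r 0 - 2 * PI * V0 r)) ->
  (forall r, a <= r <= b -> in2PIZ (G r 1 - 2 * PI * V1 r)) ->
  V0 b - V0 a = V1 b - V1 a.
Proof.
  intros Hab HG HV0 HV1 Ha Hb H0 H1. pose proof PI_RGT_0.
  destruct (uniform_continuity_rect a b (fun r t r' t' => Rabs (wrap (G r t - G r' t'))))
    with (eps := PI / 2) as [d1 [Hd1 Hu1]]; [| |exact HG|lra|].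
  { intros. rewrite <- Rabs_wrap_opp. do 3 f_equal. ring. }
  { intros. replace (G r t - G r'' t'') with ((G r t - G r' t') + (G r' t' - G r'' t'')) by ring.
    apply Rabs_wrap_triang. }
  destruct (uniform_continuity_interval a b V0 HV0 (/ 2)) as [d2 [Hd2 Hu2]]; [lra|].
  destruct (uniform_continuity_interval a b V1 HV1 (/ 2)) as [d3 [Hd3 Hu3]]; [lra|].
  set (d := Rmin d1 (Rmin d2 d3)).
  assert (Hd : 0 < d /\ d <= d1 /\ d <= d2 /\ d <= d3)
    by (unfold d, Rmin; repeat destruct Rle_dec; lra).
  destruct (fine_grid a b d Hab (proj1 Hd)) as (n & rr & tt & Hr0 & Hrn & Ht0 & Htn & Hin & Hstep).
  assert (Hdiag : forall x, Rabs (x - x) < d) by (intros; rewrite Rminus_diag, Rabs_R0; lra).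
  assert (Hr : forall i, (i <= n)%nat -> a <= rr i <= b) by (intros; apply Hin; auto).
  assert (Ht : forall k, (k <= n)%nat -> 0 <= tt k <= 1) by (intros; apply Hin; auto).
  assert (Hrs : forall i, Rabs (rr (S i) - rr i) < d) by (intros; apply Hstep).
  assert (Hts : forall k, Rabs (tt (S k) - tt k) < d) by (intros; apply Hstep).
  rewrite <- Hr0, <- Hrn.
  apply (grid_lift (fun i k => G (rr i) (tt k)) (fun i => V0 (rr i)) (fun i => V1 (rr i)) n).
  - intros i k Hi Hk. apply Hu1; try apply Hr; try apply Ht; try lia.
    + pose proof (Hrs i); lra.
    + pose proof (Hdiag (tt k)); lra.
  - intros i k Hi Hk. apply Hu1; try apply Hr; try apply Ht; try lia.
    + pose proof (Hdiag (rr i)); lra.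
    + pose proof (Hts k); lra.
  - intros k Hk. rewrite Hr0. apply Ha, Ht; auto.
  - intros k Hk. rewrite Hrn, Ht0. apply Hb, Ht; auto.
  - intros i Hi. rewrite Ht0. apply H0, Hr; auto.
  - intros i Hi. rewrite Htn. apply H1, Hr; auto.
  - intros i Hi. apply Hu2; try apply Hr; try lia. pose proof (Hrs i); lra.
  - intros i Hi. apply Hu3; try apply Hr; try lia. pose proof (Hrs i); lra.
Qed.


Theorem mainTheorem8 (a b : R) (F : R -> R -> rigged T) (F1 : rigged T) :
  a < b ->
  (forall r t, a <= r <= b -> 0 <= t <= 1 -> in_S1 distT oneT (F r t)) ->
  rhom_cont distT a b F ->
  in_S1 distT oneT F1 ->
  (forall t, 0 <= t <= 1 -> is_base_rigged oneT (F a t)) ->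
  (forall t, 0 <= t <= 1 -> forall z, F b t z = F1 z) ->
  forall theta, 0 < theta < 2 * PI ->
  forall (St0 St1 : R -> rigged R) (th0 th1 : nat -> R -> R),
    mu_data a b (fun r => F r 0) St0 th0 ->
    mu_data a b (fun r => F r 1) St1 th1 ->
    mu_sum a b theta th0 = mu_sum a b theta th1.
Proof.
  intros Hab HF Hc HF1 Hbase Hb theta Hth St0 St1 th0 th1 Hm0 Hm1.
  destruct (exists_isolating_eta theta F1 Hth HF1) as [et [Hp Hiso]].
  assert (T0 : 0 <= 0 <= 1) by lra. assert (T1 : 0 <= 1 <= 1) by lra.
  rewrite (mu_sum_Vsum a b theta et _ F1 St0 th0 Hp Hiso Hab (Hbase 0 T0) (Hb 0 T0) Hm0).
  rewrite (mu_sum_Vsum a b theta et _ F1 St1 th1 Hp Hiso Hab (Hbase 1 T1) (Hb 1 T1) Hm1).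
  destruct Hm0 as [HS0 [Hc0 [Hpr0 _]]]. destruct Hm1 as [HS1 [Hc1 [Hpr1 _]]].
  apply (homotopy_lift a b (fun r t => Gsum theta et (F r t))
           (fun r => Vsum theta et (St0 r)) (fun r => Vsum theta et (St1 r))); auto.
  - apply Gsum_homotopy_cont; auto.
  - apply Vsum_path_cont; auto.
  - apply Vsum_path_cont; auto.
  - intros t Ht. apply Gsum_base; auto; apply HF; lra.
  - intros t Ht. f_equal. apply functional_extensionality. intros z. rewrite !Hb; auto; lra.
  - intros r Hr. apply Gsum_Vsum_in2PIZ; auto; apply HF; lra.
  - intros r Hr. apply Gsum_Vsum_in2PIZ; auto; apply HF; lra.
Qed.
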